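(* There exist a constant $c>0$ and a sequence of graphs $G_1,G_2,\dots$, where $G_m$ has $n_m$ vertices and $n_m\to\infty$, such that the number of copies of $C_5$ in $G_m$ is $o(n_m^{2.442})$ as $m\to\infty$, and for every $m$, deleting fewer than $c\, n_m^{3/2}$ edges from $G_m$ never yields a triangle-free graph.
   Context: $C_5$ is the cycle on $5$ vertices; a copy of $C_5$ is a subgraph isomorphic to $C_5$. (Informally: there exist $n$-vertex graphs with $o(n^{2.442})$ copies of $C_5$ that cannot be made triangle-free by deleting $o(n^{3/2})$ edges.) *)

From mathcomp Require Import all_boot.
From Stdlib Require Import Reals.
Set Implicit Arguments. Unset Strict Implicit. Unset Printing Implicit Defensive.

Definition simple_graph (n : nat) (E : {set {set 'I_n}}) : Prop :=
  forall e, e \in E -> #|e| = 2.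

Definition C5_edges (n : nat) (f : 'I_5 -> 'I_n) : {set {set 'I_n}} :=
  [set [set f i; f (ordS i)] | i : 'I_5].

Definition is_C5_copy (n : nat) (S : {set {set 'I_n}}) : bool :=
  [exists f : {ffun 'I_5 -> 'I_n}, injectiveb f && (S == C5_edges f)].

Definition num_C5 (n : nat) (E : {set {set 'I_n}}) : nat :=
  #|[set S in powerset E | is_C5_copy S]|.

Definition has_triangle (n : nat) (F : {set {set 'I_n}}) : Prop :=
  exists x y z : 'I_n, [/\ x != y, y != z, x != z &
    [/\ [set x; y] \in F, [set y; z] \in F & [set x; z] \in F]].

Definition triangle_free (n : nat) (F : {set {set 'I_n}}) : Prop :=
  ~ has_triangle F.

From mathcomp Require Import all_boot.
From Stdlib Require Import Reals Lra Psatz BinNat.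
(* Stdlib's [Nat.pow] notation shadows ssrnat's [^] on [nat]; re-importing restores [expn]. *)
Import ssrnat.
Set Implicit Arguments. Unset Strict Implicit. Unset Printing Implicit Defensive.

(* The graphs are the tensor powers of the tensor product B of four copies of GH and
   thirteen copies of K3, where GH is the collinearity graph of the generalized hexagon
   GH(2,8).  In GH and in K3 every edge lies in exactly one triangle, a property preserved
   by tensor products; so the triangles of every power of B are edge-disjoint, and a
   triangle-free subgraph must miss at least (number of ordered triangles)/6 edges.  Under
   tensor products the numbers of vertices and of ordered triangles multiply, and the
   number of closed 5-walks, which bounds the number of copies of C5, at most multiplies.
   GH has 819 vertices, 819 * 18 ordered triangles and, being vertex-transitive,
   819 * 1530 closed 5-walks; K3 has 3, 6 and 30.  Thus the k-th power of B has
   n = (819^4 3^13)^k vertices, at least n^(3/2) ordered triangles, and at most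
   ((819 * 1530)^4 30^13)^k = o(n^(105/43)) closed 5-walks, where 105/43 < 2.442. *)

(* Finite simple graphs whose triangles are pairwise edge-disjoint. *)
Record ltgraph := LTGraph {
  vertex :> finType;
  adj : rel vertex;
  adj_sym : symmetric adj;
  adj_irr : irreflexive adj;
  common_nbr_uniq : forall x y z z',
    adj x y -> adj x z -> adj y z -> adj x z' -> adj y z' -> z = z' }.
Arguments adj {G} : rename.

Lemma adj_neq (G : ltgraph) (x y : G) : adj x y -> x != y.
Proof. by apply: contraTneq => ->; rewrite adj_irr. Qed.

Definition arcs (G : ltgraph) : {set G * G} := [set p | adj p.1 p.2].

Definition triangles (G : ltgraph) : {set G * G * G} :=
  [set t | [&& adj t.1.1 t.1.2, adj t.1.2 t.2 & adj t.1.1 t.2]].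

Definition closed_walks5 (G : ltgraph) : {set G * G * G * G * G} :=
  [set w | [&& adj w.1.1.1.1 w.1.1.1.2, adj w.1.1.1.2 w.1.1.2, adj w.1.1.2 w.1.2,
               adj w.1.2 w.2 & adj w.2 w.1.1.1.1]].

Definition closed_walks5_at (G : ltgraph) (x : G) : {set G * G * G * G} :=
  [set w | [&& adj x w.1.1.1, adj w.1.1.1 w.1.1.2, adj w.1.1.2 w.1.2,
               adj w.1.2 w.2 & adj w.2 x]].

Lemma card_rel_pairs (T : finType) (R : rel T) :
  #|[set p : T * T | R p.1 p.2]| = \sum_x #|[set y | R x y]|.
Proof.
transitivity (\sum_x \sum_(y | R x y) 1).
  by rewrite pair_big_dep -sum1_card; apply: eq_bigl => p; rewrite inE.
by apply: eq_bigr => x _; rewrite -sum1_card; apply: eq_bigl => y; rewrite inE.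
Qed.

Lemma card_set4 (T : finType) (P : T -> T -> T -> T -> bool) :
  #|[set w : T * T * T * T | P w.1.1.1 w.1.1.2 w.1.2 w.2]| =
  \sum_a \sum_b \sum_c \sum_d P a b c d.
Proof.
rewrite -sum1_card !pair_bigA big_mkcond /=.
by apply: eq_bigr => w _; rewrite inE; case: (P _ _ _ _).
Qed.

Lemma eq_set2 (T : finType) (a b c d : T) :
  [set a; b] = [set c; d] -> (a = c /\ b = d) \/ (a = d /\ b = c).
Proof.
move=> abcd.
have ac : a \in [set c; d] by rewrite -abcd set21.
have bc : b \in [set c; d] by rewrite -abcd set22.
have ca : c \in [set a; b] by rewrite abcd set21.
have da : d \in [set a; b] by rewrite abcd set22.
case/set2P: ac => ?; case/set2P: bc => ?; subst; try by [left | right].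
- by case/set2P: da => ->; left.
- by case/set2P: ca => ->; right.
Qed.

Lemma card_set2_pairs (T : finType) (D : {set {set T}}) :
  #|[set p : T * T | [set p.1; p.2] \in D]| <= 2 * #|D|.
Proof.
pose g (p : T * T) := ([set p.1; p.2], enum_rank p.1 < enum_rank p.2).
have g_inj : injective g.
  move=> [a b] [c d] [/eq_set2[[-> ->] // | [-> ->]]].
  by case: (ltngtP (enum_rank c) (enum_rank d)) => // /val_inj/enum_rank_inj->.
rewrite -(card_imset _ g_inj) mulnC -[2]card_bool -cardsT -cardsX.
by apply/subset_leq_card/subsetP => q /imsetP[p]; rewrite inE => pD ->; rewrite !inE pD.
Qed.

Section TriangleUniqueness.
Variable G : ltgraph.
Implicit Types x y z : G.

Lemma triangle_third x y z z' :
  (x, y, z) \in triangles G -> (x, y, z') \in triangles G -> z = z'.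
Proof.
by rewrite !inE /= => /and3P[xy yz xz] /and3P[_ yz' xz']; apply: (common_nbr_uniq xy).
Qed.

Lemma triangle_first x x' y z :
  (x, y, z) \in triangles G -> (x', y, z) \in triangles G -> x = x'.
Proof.
rewrite !inE /= => /and3P[xy yz xz] /and3P[x'y _ x'z].
by apply: (common_nbr_uniq yz); rewrite // adj_sym.
Qed.

Lemma triangle_second x y y' z :
  (x, y, z) \in triangles G -> (x, y', z) \in triangles G -> y = y'.
Proof.
rewrite !inE /= => /and3P[xy yz xz] /and3P[xy' y'z _].
by apply: (common_nbr_uniq xz); rewrite // adj_sym.
Qed.

End TriangleUniqueness.

Section Counting.
Variable G : ltgraph.

Lemma card_arcs_le_triangles :
  (forall x y : G, adj x y -> exists z, adj x z && adj y z) ->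
  #|arcs G| <= #|triangles G|.
Proof.
move=> common.
pose third (x y : G) := odflt x [pick z | adj x z && adj y z].
pose f (p : G * G) := (p.1, p.2, third p.1 p.2).
have f_inj : injective f by move=> [? ?] [? ?] [-> ->].
rewrite -(card_imset _ f_inj); apply/subset_leq_card/subsetP => t /imsetP[[x y]].
rewrite inE /= => xy ->; rewrite inE /= xy /third.
case: pickP => [z /andP[-> ->] // | no_common].
by have [z xyz] := common x y xy; move: (no_common z); rewrite xyz.
Qed.

Lemma card_closed_walks5_at (x : G) : #|closed_walks5_at x| =
  \sum_(a | adj x a) \sum_(b | adj a b) \sum_(c | adj b c) \sum_(d | adj c d) adj d x.
Proof.
rewrite (card_set4 (fun a b c d => [&& adj x a, adj a b, adj b c, adj c d & adj d x])).
rewrite [RHS]big_mkcond; apply: eq_bigr => a _; case: (adj x a) => /=; last first.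
  by rewrite big1 // => b _; rewrite big1 // => c _; rewrite big1.
rewrite [RHS]big_mkcond; apply: eq_bigr => b _; case: (adj a b) => /=; last first.
  by rewrite big1 // => c _; rewrite big1.
rewrite [RHS]big_mkcond; apply: eq_bigr => c _; case: (adj b c) => /=; last by rewrite big1.
by rewrite [RHS]big_mkcond; apply: eq_bigr => d _; case: (adj c d).
Qed.

Lemma card_closed_walks5_le_transitive (x0 : G) (sigma : G -> G -> G) :
  (forall x, injective (sigma x)) ->
  (forall x y z, adj y z -> adj (sigma x y) (sigma x z)) ->
  (forall x, sigma x x = x0) ->
  #|closed_walks5 G| <= #|G| * #|closed_walks5_at x0|.
Proof.
move=> sigma_inj sigma_adj sigma_x.
pose f (w : G * G * G * G * G) :=
  let s := sigma w.1.1.1.1 in (w.1.1.1.1, (s w.1.1.1.2, s w.1.1.2, s w.1.2, s w.2)).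
have f_inj : injective f.
  move=> [[[[a b] c] d] e] [[[[a' b'] c'] d'] e'] /= [ea].
  by rewrite -{a'}ea => /sigma_inj-> /sigma_inj-> /sigma_inj-> /sigma_inj->.
rewrite -cardsT -cardsX -(card_imset _ f_inj).
apply/subset_leq_card/subsetP => t /imsetP[[[[[a b] c] d] e]].
rewrite inE /= => /and5P[ab bc cd de ea] ->.
by rewrite !inE /= -{1 2}(sigma_x a) !sigma_adj.
Qed.

End Counting.

Section Transport.
Variables (G : ltgraph) (x0 : G) (step : G -> G -> G).
Hypotheses (step_inj : forall x, injective (step x))
  (step_adj : forall x y z, adj y z -> adj (step x y) (step x z)).

Fixpoint transport (fuel : nat) (x : G) : G -> G :=
  if fuel is fuel'.+1 then
    if x == x0 then idfun else transport fuel' (step x x) \o step x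
  else idfun.

Lemma transport_inj fuel x : injective (transport fuel x).
Proof.
elim: fuel x => [|fuel IH] x /=; first by move=> y z.
by case: eqP => _ y z // /IH /step_inj.
Qed.

Lemma transport_adj fuel x y z : adj y z -> adj (transport fuel x y) (transport fuel x z).
Proof.
elim: fuel x y z => [|fuel IH] x y z yz //=.
by case: eqP => // _; apply/IH/step_adj.
Qed.

End Transport.

Section Tensor.
Variables G H : ltgraph.

Definition tensor_adj : rel (G * H) := fun u v => adj u.1 v.1 && adj u.2 v.2.

Lemma tensor_adj_sym : symmetric tensor_adj.
Proof. by move=> u v; rewrite /tensor_adj adj_sym [adj u.2 _]adj_sym. Qed.

Lemma tensor_adj_irr : irreflexive tensor_adj.
Proof. by move=> u; rewrite /tensor_adj adj_irr. Qed.

Lemma tensor_common_nbr_uniq u v w w' :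
  tensor_adj u v -> tensor_adj u w -> tensor_adj v w ->
  tensor_adj u w' -> tensor_adj v w' -> w = w'.
Proof.
case: w w' => [w1 w2] [w1' w2']; rewrite /tensor_adj /=.
move=> /andP[uv1 uv2] /andP[uw1 uw2] /andP[vw1 vw2] /andP[uw1' uw2'] /andP[vw1' vw2'].
by rewrite (common_nbr_uniq uv1 uw1 vw1 uw1' vw1') (common_nbr_uniq uv2 uw2 vw2 uw2' vw2').
Qed.

Definition tensor : ltgraph := LTGraph tensor_adj_sym tensor_adj_irr tensor_common_nbr_uniq.

Lemma card_tensor : #|tensor| = #|G| * #|H|.
Proof. exact: card_prod. Qed.

Lemma card_triangles_tensor : #|triangles G| * #|triangles H| <= #|triangles tensor|.
Proof.
rewrite -cardsX.
pose f (p : G * G * G * (H * H * H)) : tensor * tensor * tensor :=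
  ((p.1.1.1, p.2.1.1), (p.1.1.2, p.2.1.2), (p.1.2, p.2.2)).
have f_inj : injective f.
  by move=> [[[? ?] ?] [[? ?] ?]] [[[? ?] ?] [[? ?] ?]] /= [-> -> -> -> -> ->].
rewrite -(card_imset _ f_inj); apply/subset_leq_card/subsetP => t /imsetP[p].
case: p => [[[x1 y1] z1] [[x2 y2] z2]]; rewrite !inE /= => /andP[t1 t2] ->.
by rewrite /tensor_adj /=; case/and3P: t1 => -> -> ->; case/and3P: t2 => -> -> ->.
Qed.

Lemma card_closed_walks5_tensor :
  #|closed_walks5 tensor| <= #|closed_walks5 G| * #|closed_walks5 H|.
Proof.
rewrite -cardsX.
pose f (w : tensor * tensor * tensor * tensor * tensor) :=
  ((w.1.1.1.1.1, w.1.1.1.2.1, w.1.1.2.1, w.1.2.1, w.2.1),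
   (w.1.1.1.1.2, w.1.1.1.2.2, w.1.1.2.2, w.1.2.2, w.2.2)).
have f_inj : injective f.
  move=> [[[[[? ?] [? ?]] [? ?]] [? ?]] [? ?]] [[[[[? ?] [? ?]] [? ?]] [? ?]] [? ?]] /=.
  by case=> -> -> -> -> -> -> -> -> -> ->.
rewrite -(card_imset _ f_inj); apply/subset_leq_card/subsetP => t /imsetP[w].
case: w => [[[[[a1 a2] [b1 b2]] [c1 c2]] [d1 d2]] [e1 e2]].
rewrite !inE /= /tensor_adj /=.
case/and5P=> /andP[a1b1 a2b2] /andP[b1c1 b2c2] /andP[c1d1 c2d2] /andP[d1e1 d2e2].
by case/andP=> e1a1 e2a2 ->; rewrite /= a1b1 b1c1 c1d1 d1e1 e1a1 a2b2 b2c2 c2d2 d2e2 e2a2.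
Qed.

End Tensor.

(* [tensor_pow G k] has [k.+1] factors. *)
Fixpoint tensor_pow (G : ltgraph) (k : nat) : ltgraph :=
  if k is k'.+1 then tensor (tensor_pow G k') G else G.

Lemma card_tensor_pow G k : #|tensor_pow G k| = #|G| ^ k.+1.
Proof.
elim: k => [|k IHk]; first by rewrite expn1.
by rewrite (card_tensor (tensor_pow G k) G) IHk -expnSr.
Qed.

Lemma card_triangles_tensor_pow G k :
  #|triangles G| ^ k.+1 <= #|triangles (tensor_pow G k)|.
Proof.
elim: k => [|k IHk]; first by rewrite expn1.
rewrite expnSr; apply: leq_trans (card_triangles_tensor _ _).
by rewrite leq_mul2r IHk orbT.
Qed.

Lemma card_closed_walks5_tensor_pow G k :
  #|closed_walks5 (tensor_pow G k)| <= #|closed_walks5 G| ^ k.+1.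
Proof.
elim: k => [|k IHk]; first by rewrite expn1.
rewrite expnSr; apply: leq_trans (card_closed_walks5_tensor _ _) _.
by rewrite leq_mul2r IHk orbT.
Qed.

Section EdgeSet.
Variable G : ltgraph.

Definition edge_set : {set {set 'I_#|G|}} :=
  [set [set enum_rank p.1; enum_rank p.2] | p in arcs G].

Lemma mem_edge_set (a b : 'I_#|G|) :
  ([set a; b] \in edge_set) = adj (enum_val a) (enum_val b).
Proof.
apply/imsetP/idP => [[[x y]] | ab]; last first.
  by exists (enum_val a, enum_val b); rewrite ?inE //= !enum_valK.
by rewrite inE /= => xy /eq_set2[[-> ->] | [-> ->]]; rewrite !enum_rankK // adj_sym.
Qed.

Lemma edge_set_simple : simple_graph edge_set.
Proof.
move=> e /imsetP[[x y]]; rewrite inE /= => xy ->.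
by rewrite cards2 (inj_eq enum_rank_inj) adj_neq.
Qed.

Lemma num_C5_le_closed_walks5 : num_C5 edge_set <= #|closed_walks5 G|.
Proof.
pose maps := [set f : {ffun 'I_5 -> 'I_#|G|} | C5_edges f \subset edge_set].
have copies_sub : [set S in powerset edge_set | is_C5_copy S] \subset
                  [set C5_edges (f : {ffun _ -> _}) | f in maps].
  apply/subsetP => S; rewrite !inE => /andP[SE /existsP[f /andP[_ /eqP S_f]]].
  by apply/imsetP; exists f; rewrite // inE -S_f.
apply: leq_trans (subset_leq_card copies_sub) (leq_trans (leq_imset_card _ _) _).
pose walk (f : {ffun 'I_5 -> 'I_#|G|}) :=
  let v k := enum_val (f (iter k (@ordS 5) ord0)) in (v 0, v 1, v 2, v 3, v 4).
have walk_inj : injective walk.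
  move=> f f' [e0 e1 e2 e3 e4]; apply/ffunP => i; apply: enum_val_inj.
  have -> : i = iter i (@ordS 5) ord0.
    by case: i => [[|[|[|[|[|k]]]]] lt_k5] //; apply: val_inj.
  by case: i => [[|[|[|[|[|k]]]]] lt_k5].
rewrite -(card_imset _ walk_inj); apply/subset_leq_card/subsetP => w /imsetP[f].
rewrite inE => f_sub ->.
have f_adj k :
    adj (enum_val (f (iter k (@ordS 5) ord0))) (enum_val (f (iter k.+1 (@ordS 5) ord0))).
  by rewrite -mem_edge_set; apply: (subsetP f_sub); apply: imset_f.
rewrite inE; apply/and5P; split; [exact: f_adj 0 | exact: f_adj 1 | exact: f_adj 2 |
  exact: f_adj 3 | ].
by have := f_adj 4; rewrite (_ : iter 5 (@ordS 5) ord0 = ord0) //; apply: val_inj.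
Qed.

Lemma card_triangles_le_deleted (F : {set {set 'I_#|G|}}) :
  F \subset edge_set -> triangle_free F -> #|triangles G| <= 6 * #|edge_set :\: F|.
Proof.
move=> FE F_free; set D := edge_set :\: F.
pose r := @enum_rank G.
pose h (t : G * G * G) : option bool * ('I_#|G| * 'I_#|G|) :=
  let: (x, y, z) := t in
  if [set r x; r y] \notin F then (None, (r x, r y))
  else if [set r y; r z] \notin F then (Some false, (r y, r z))
  else (Some true, (r x, r z)).
have h_inj : {in triangles G &, injective h}.
  move=> [[x y] z] [[x' y'] z'] t t'; rewrite /h.
  case: ifP => _; case: ifP => _; try case: ifP => _; try case: ifP => _;
    move=> [] // /enum_rank_inj E1 /enum_rank_inj E2; subst.
  - by rewrite (triangle_third t t').
  - by rewrite (triangle_first t t').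
  - by rewrite (triangle_second t t').
rewrite -(card_in_imset h_inj) (_ : 6 = 3 * 2) // -mulnA.
apply: (@leq_trans #|setX [set: option bool] [set p | [set p.1; p.2] \in D]|); last first.
  by rewrite cardsX cardsT card_option card_bool leq_mul2l card_set2_pairs orbT.
apply/subset_leq_card/subsetP => _ /imsetP[[[x y] z] t ->].
have edge u v : adj u v -> [set r u; r v] \in edge_set by rewrite mem_edge_set !enum_rankK.
have neq u v : adj u v -> r u != r v by rewrite (inj_eq enum_rank_inj); apply: adj_neq.
move: (t); rewrite inE => /and3P[xy yz xz].
rewrite /h; case: ifPn => [Fxy | /negPn Fxy]; first by rewrite !inE Fxy edge.
case: ifPn => [Fyz | /negPn Fyz]; first by rewrite !inE Fyz edge.
case: (boolP ([set r x; r z] \in F)) => [Fxz | Fxz]; last by rewrite !inE Fxz edge.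
by case: F_free; exists (r x), (r y), (r z); split; [apply: neq.. | split].
Qed.

End EdgeSet.

(* Row [i] of [tbl] lists the neighbours of vertex [i], as binary numbers to keep the
   certificate checks fast; the last conjunct says that every edge lies in exactly one
   triangle. *)
Local Open Scope N_scope.

Definition table_ok (n : nat) (tbl : seq (seq N)) : bool :=
  all (fun i => let s := nth [::] tbl i in
         [&& uniq s, all (fun k : N => k < n)%N s, bin_of_nat i \notin s &
             all (fun k : N => let t := nth [::] tbl k in
                    (bin_of_nat i \in t) && (count (mem t) s == 1)%N) s])
      (iota 0 n).

(* [g] lists the images of [0, ..., n-1]. *)
Definition automorphism_ok (n : nat) (tbl : seq (seq N)) (g : seq N) : bool :=
  [&& size g == n, uniq g, all (fun k : N => k < n)%N g &
      all (fun i => let t := nth [::] tbl (nth 0 g i) in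
             all (fun k : N => nth 0 g k \in t) (nth [::] tbl i)) (iota 0 n)].

Local Close Scope N_scope.

Section TableGraph.
Variables (n : nat) (tbl : seq (seq N)).
Hypotheses (n_gt0 : 0 < n) (tbl_ok : table_ok n tbl).

Definition tvertex (i : nat) : 'I_n := Ordinal (ltn_pmod i n_gt0).
Definition tnbrs (i : nat) : seq N := nth [::] tbl i.
Definition tadj : rel 'I_n := fun x y => bin_of_nat y \in tnbrs x.

Lemma val_tvertex i : i < n -> tvertex i = i :> nat.
Proof. exact: modn_small. Qed.

Lemma tvertexE (x : 'I_n) : tvertex x = x.
Proof. exact/val_inj/val_tvertex. Qed.

Lemma tvertexK (k : N) : k < n -> bin_of_nat (tvertex k) = k.
Proof. by move=> lt_kn; rewrite val_tvertex // nat_of_binK. Qed.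

Lemma tnbrs_ok (x : 'I_n) :
  [&& uniq (tnbrs x), all (fun k : N => k < n) (tnbrs x), bin_of_nat x \notin tnbrs x &
      all (fun k : N => (bin_of_nat x \in tnbrs k) && (count (mem (tnbrs k)) (tnbrs x) == 1))
          (tnbrs x)].
Proof. by move/allP: tbl_ok; apply; rewrite mem_iota add0n ltn_ord. Qed.

Lemma tnbrs_lt (x : 'I_n) k : k \in tnbrs x -> k < n.
Proof. by case/and4P: (tnbrs_ok x) => _ /allP lt_n _ _; apply: lt_n. Qed.

Lemma tadj_sym : symmetric tadj.
Proof.
suff tadjW x y : tadj x y -> tadj y x by move=> x y; apply/idP/idP; apply: tadjW.
case/and4P: (tnbrs_ok x) => _ _ _ /allP nbrs_ok /nbrs_ok /andP[].
by rewrite bin_of_natK.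
Qed.

Lemma tadj_irr : irreflexive tadj.
Proof. by move=> x; case/and4P: (tnbrs_ok x) => _ _ /negbTE. Qed.

Lemma tcommon_count x y : tadj x y -> count (mem (tnbrs y)) (tnbrs x) = 1.
Proof.
case/and4P: (tnbrs_ok x) => _ _ _ /allP nbrs_ok /nbrs_ok /andP[_].
by rewrite bin_of_natK => /eqP.
Qed.

Lemma tcommon_nbr_uniq x y z z' :
  tadj x y -> tadj x z -> tadj y z -> tadj x z' -> tadj y z' -> z = z'.
Proof.
move=> xy xz yz xz' yz'; apply/eqP/negPn/negP => neq_zz'.
have : 2 <= count (mem (tnbrs y)) (tnbrs x); last by rewrite tcommon_count.
rewrite -size_filter (uniq_leq_size (s1 := [:: bin_of_nat z; bin_of_nat z'])) //.
  by rewrite /= inE (inj_eq (can_inj bin_of_natK)) val_eqE neq_zz'.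
by move=> k; rewrite !inE mem_filter => /orP[] /eqP->; apply/andP.
Qed.

Definition table_graph : ltgraph := LTGraph tadj_sym tadj_irr tcommon_nbr_uniq.

Lemma sum_tadj x (F : 'I_n -> nat) :
  \sum_(y | tadj x y) F y = \sum_(k <- tnbrs x) F (tvertex (k : N)).
Proof.
have nbrs_uniq : uniq [seq tvertex (k : N) | k <- tnbrs x].
  case/and4P: (tnbrs_ok x) => uniq_nbrs _ _ _.
  rewrite map_inj_in_uniq // => k k' /tnbrs_lt k_lt /tnbrs_lt k'_lt.
  by move/(congr1 (@bin_of_nat \o val)); rewrite /= !tvertexK.
rewrite -(big_map (fun k : N => tvertex k) xpredT) big_uniq //; apply: eq_bigl => y.
apply/idP/mapP => [xy | [k xk ->]].
  by exists (bin_of_nat y); rewrite // bin_of_natK tvertexE.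
by rewrite /tadj tvertexK // (tnbrs_lt xk).
Qed.

Lemma sum_tadj_common x z :
  \sum_(y | tadj x y) tadj y z = count (mem (tnbrs z)) (tnbrs x).
Proof.
rewrite sum_tadj -sum1_count [RHS]big_mkcond !big_seq.
by apply: eq_bigr => k xk; rewrite tadj_sym /tadj tvertexK ?(tnbrs_lt xk).
Qed.

Lemma table_graph_common_nbr (x y : table_graph) : adj x y -> exists z, adj x z && adj y z.
Proof.
move=> xy; have /hasP[k xk yk] : has (mem (tnbrs y)) (tnbrs x).
  by rewrite has_count (tcommon_count xy).
by exists (tvertex k); rewrite /= /tadj tvertexK ?xk ?yk ?(tnbrs_lt xk).
Qed.

Lemma card_table_graph : #|table_graph| = n.
Proof. exact: card_ord. Qed.

Lemma card_table_arcs :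
  #|arcs table_graph| = \sum_(0 <= i < n) size (tnbrs i).
Proof.
rewrite card_rel_pairs big_mkord; apply: eq_bigr => x _.
rewrite -sum1_card (eq_bigl (tadj x)) => [|y]; last by rewrite inE.
by rewrite sum_tadj sum1_size.
Qed.

Lemma card_table_closed_walks5_at (x : table_graph) : #|closed_walks5_at x| =
  \sum_(k1 <- tnbrs x) \sum_(k2 <- tnbrs (tvertex (k1 : N)))
    \sum_(k3 <- tnbrs (tvertex (k2 : N))) count (mem (tnbrs x)) (tnbrs (tvertex (k3 : N))).
Proof.
rewrite card_closed_walks5_at.
under eq_bigr => a _ do under eq_bigr => b _ do under eq_bigr => c _ do
  rewrite (sum_tadj_common c x).
rewrite sum_tadj; under eq_bigr => k1 _ do rewrite sum_tadj.
by under eq_bigr => k1 _ do under eq_bigr => k2 _ do rewrite sum_tadj.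
Qed.

Variables (gens : seq (seq N)) (choice : seq nat).

Definition tgen (g : seq N) (x : 'I_n) : 'I_n := tvertex (nth 0%num g x).
Definition tstep (x : 'I_n) : 'I_n -> 'I_n := tgen (nth [::] gens (nth 0 choice x)).

(* [nth 0 choice x] indexes the generator that moves [x] one step towards vertex [0]. *)
Definition transitivity_ok (fuel : nat) : bool :=
  [&& all (automorphism_ok n tbl) gens,
      all (fun i => nth 0 choice i < size gens) (iota 0 n) &
      all (fun i => transport (tvertex 0 : table_graph) tstep fuel (tvertex i) (tvertex i)
                      == tvertex 0) (iota 0 n)].

Lemma tgen_inj g : automorphism_ok n tbl g -> injective (tgen g).
Proof.
case/and4P=> /eqP size_g uniq_g /allP g_lt _ x y.
have g_lt' (z : 'I_n) : nth 0%num g z < n by apply/g_lt/mem_nth; rewrite size_g.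
move/(congr1 (@bin_of_nat \o val)); rewrite /= !tvertexK // => /eqP.
by rewrite nth_uniq ?size_g // => /eqP/val_inj.
Qed.

Lemma tgen_adj g x y : automorphism_ok n tbl g -> tadj x y -> tadj (tgen g x) (tgen g y).
Proof.
case/and4P=> /eqP size_g _ /allP g_lt /allP g_adj xy.
have g_lt' (z : 'I_n) : nth 0%num g z < n by apply/g_lt/mem_nth; rewrite size_g.
have x_iota : (x : nat) \in iota 0 n by rewrite mem_iota add0n ltn_ord.
move/allP: (g_adj x x_iota) => /(_ _ xy); rewrite bin_of_natK.
by rewrite /tadj /tnbrs !tvertexK // val_tvertex.
Qed.

Lemma card_table_closed_walks5 fuel : transitivity_ok fuel ->
  #|closed_walks5 table_graph| <= n * #|closed_walks5_at (tvertex 0 : table_graph)|.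
Proof.
case/and3P=> /allP gens_ok /allP choice_lt /allP reach.
have step_ok (x : 'I_n) : automorphism_ok n tbl (nth [::] gens (nth 0 choice x)).
  by apply/gens_ok/mem_nth/choice_lt; rewrite mem_iota add0n ltn_ord.
rewrite -[X in X * _]card_table_graph.
apply: (card_closed_walks5_le_transitive
  (sigma := @transport table_graph (tvertex 0) tstep fuel)).
- by move=> x; apply: transport_inj => y; apply: tgen_inj.
- by move=> x y z; apply: transport_adj => w a b; apply: tgen_adj.
- move=> x; apply/eqP; rewrite -{1 2}(tvertexE x).
  by apply: reach; rewrite mem_iota add0n ltn_ord.
Qed.

End TableGraph.

Local Open Scope N_scope.
Definition k3_table : seq (seq N) := [:: [:: 1; 2]; [:: 0; 2]; [:: 0; 1]].
Definition k3_generators : seq (seq N) := [:: [:: 2; 0; 1]].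
Local Close Scope N_scope.

Lemma k3_table_ok : table_ok 3 k3_table.
Proof. by vm_compute. Qed.

Definition k3 : ltgraph := table_graph k3_table_ok.

Lemma card_k3 : #|k3| = 3.
Proof. exact: card_table_graph. Qed.

Lemma card_triangles_k3 : 6 <= #|triangles k3|.
Proof.
apply: leq_trans (card_arcs_le_triangles (@table_graph_common_nbr _ _ (isT : 0 < 3) _)).
by rewrite card_table_arcs // unlock.
Qed.

Lemma card_closed_walks5_k3 : #|closed_walks5 k3| <= 3 * 10.
Proof.
apply: leq_trans
  (@card_table_closed_walks5 _ _ (isT : 0 < 3) _ k3_generators [:: 0; 0; 0] 2 _) _.
  by vm_compute.
by rewrite leq_mul2l card_table_closed_walks5_at unlock; vm_compute.
Qed.

(* The collinearity graph of the generalized hexagon GH(2,8) (819 points, 9 lines of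
   3 points through each point), and two of its automorphisms which, composed as
   prescribed by [hexagon_generator_choice], move any point to point [0]. *)
Local Open Scope N_scope.

Definition hexagon_table : seq (seq N) := [::
  [:: 1; 2; 10; 12; 63; 64; 65; 66; 67; 68; 69; 70; 71; 72; 73; 74; 75; 76];
  [:: 0; 2; 4; 7; 147; 148; 149; 150; 151; 152; 153; 154; 155; 156; 157; 158; 159; 160];
  [:: 0; 1; 16; 20; 231; 232; 233; 234; 235; 236; 237; 238; 239; 240; 241; 242; 243; 244];
  [:: 4; 5; 9; 15; 21; 22; 23; 24; 25; 26; 27; 28; 29; 30; 31; 32; 33; 34];
  [:: 1; 3; 5; 7; 161; 162; 165; 166; 169; 170; 173; 174; 177; 178; 181; 182; 185; 186];
  [:: 3; 4; 13; 19; 189; 190; 191; 192; 193; 194; 195; 196; 197; 198; 199; 200; 201; 202];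
  [:: 7; 8; 11; 18; 105; 106; 107; 108; 109; 110; 111; 112; 113; 114; 115; 116; 117; 118];
  [:: 1; 4; 6; 8; 163; 164; 167; 168; 171; 172; 175; 176; 179; 180; 183; 184; 187; 188];
  [:: 6; 7; 14; 17; 273; 274; 275; 276; 277; 278; 279; 280; 281; 282; 283; 284; 285; 286];
  [:: 3; 10; 11; 15; 35; 36; 39; 40; 43; 44; 47; 48; 51; 52; 55; 56; 59; 60];
  [:: 0; 9; 11; 12; 77; 78; 81; 82; 85; 86; 89; 90; 93; 94; 97; 98; 101; 102];
  [:: 6; 9; 10; 18; 119; 120; 123; 124; 127; 128; 131; 132; 135; 136; 139; 140; 143; 144];
  [:: 0; 10; 13; 14; 79; 80; 83; 84; 87; 88; 91; 92; 95; 96; 99; 100; 103; 104];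
  [:: 5; 12; 14; 19; 203; 204; 207; 208; 211; 212; 215; 216; 219; 220; 223; 224; 227; 228];
  [:: 8; 12; 13; 17; 287; 288; 291; 292; 295; 296; 299; 300; 303; 304; 307; 308; 311; 312];
  [:: 3; 9; 16; 17; 37; 38; 41; 42; 45; 46; 49; 50; 53; 54; 57; 58; 61; 62];
  [:: 2; 15; 17; 20; 245; 246; 249; 250; 253; 254; 257; 258; 261; 262; 265; 266; 269; 270];
  [:: 8; 14; 15; 16; 289; 290; 293; 294; 297; 298; 301; 302; 305; 306; 309; 310; 313; 314];
  [:: 6; 11; 19; 20; 121; 122; 125; 126; 129; 130; 133; 134; 137; 138; 141; 142; 145; 146];
  [:: 5; 13; 18; 20; 205; 206; 209; 210; 213; 214; 217; 218; 221; 222; 225; 226; 229; 230];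
  [:: 2; 16; 18; 19; 247; 248; 251; 252; 255; 256; 259; 260; 263; 264; 267; 268; 271; 272];
  [:: 3; 22; 63; 105; 247; 287; 327; 369; 435; 456; 502; 544; 571; 634; 659; 701; 767; 788];
  [:: 3; 21; 80; 122; 232; 273; 354; 396; 411; 474; 511; 553; 607; 628; 686; 728; 743; 806];
  [:: 3; 24; 65; 107; 251; 291; 317; 359; 438; 459; 496; 538; 578; 641; 666; 708; 763; 784];
  [:: 3; 23; 84; 126; 234; 275; 350; 392; 399; 462; 520; 562; 602; 623; 672; 714; 751; 814];
  [:: 3; 26; 67; 109; 255; 295; 326; 368; 421; 442; 486; 528; 584; 647; 664; 706; 774; 795];
  [:: 3; 25; 88; 130; 236; 277; 341; 383; 409; 472; 516; 558; 593; 614; 682; 724; 747; 810];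
  [:: 3; 28; 69; 111; 259; 299; 319; 361; 434; 455; 483; 525; 573; 636; 671; 713; 773; 794];
  [:: 3; 27; 92; 134; 238; 279; 337; 379; 404; 467; 522; 564; 588; 609; 677; 719; 755; 818];
  [:: 3; 30; 71; 113; 263; 303; 334; 376; 427; 448; 500; 542; 568; 631; 660; 702; 759; 780];
  [:: 3; 29; 96; 138; 240; 281; 352; 394; 418; 481; 515; 557; 604; 625; 690; 732; 744; 807];
  [:: 3; 32; 73; 115; 267; 307; 321; 363; 425; 446; 494; 536; 585; 648; 652; 694; 768; 789];
  [:: 3; 31; 100; 142; 242; 283; 345; 387; 407; 470; 506; 548; 597; 618; 679; 721; 735; 798];
  [:: 3; 34; 75; 117; 271; 311; 330; 372; 430; 451; 490; 532; 581; 644; 656; 698; 757; 778];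
  [:: 3; 33; 104; 146; 244; 285; 342; 384; 415; 478; 508; 550; 596; 617; 689; 731; 739; 802];
  [:: 9; 36; 147; 203; 248; 274; 333; 351; 444; 468; 531; 549; 576; 600; 663; 681; 792; 816];
  [:: 9; 35; 164; 205; 231; 288; 375; 393; 405; 423; 489; 507; 621; 639; 705; 723; 753; 771];
  [:: 15; 38; 79; 106; 148; 206; 318; 378; 429; 477; 505; 535; 592; 646; 668; 716; 761; 809];
  [:: 15; 37; 64; 121; 163; 204; 336; 360; 414; 450; 493; 547; 583; 613; 674; 710; 746; 782];
  [:: 9; 40; 149; 207; 252; 276; 329; 356; 452; 479; 541; 556; 574; 589; 653; 680; 797; 812];
  [:: 9; 39; 168; 209; 233; 292; 371; 398; 416; 431; 499; 514; 610; 637; 695; 722; 749; 776];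
  [:: 15; 42; 83; 108; 150; 210; 324; 381; 428; 482; 509; 533; 598; 649; 670; 718; 765; 804];
  [:: 15; 41; 66; 125; 167; 208; 339; 366; 419; 449; 491; 551; 586; 619; 676; 712; 741; 786];
  [:: 9; 44; 151; 211; 256; 278; 320; 338; 458; 476; 539; 563; 587; 599; 662; 692; 779; 803];
  [:: 9; 43; 172; 213; 235; 296; 362; 380; 413; 437; 497; 521; 620; 650; 704; 734; 740; 758];
  [:: 15; 46; 87; 110; 152; 214; 331; 385; 440; 464; 512; 545; 603; 630; 651; 720; 772; 817];
  [:: 15; 45; 68; 129; 171; 212; 343; 373; 401; 461; 503; 554; 567; 624; 678; 693; 754; 793];
  [:: 9; 48; 153; 215; 260; 280; 315; 348; 447; 480; 543; 552; 582; 591; 655; 688; 790; 799];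
  [:: 9; 47; 176; 217; 237; 300; 357; 390; 417; 426; 501; 510; 612; 645; 697; 730; 736; 769];
  [:: 15; 50; 91; 112; 154; 218; 323; 389; 436; 475; 513; 540; 594; 642; 665; 725; 764; 815];
  [:: 15; 49; 70; 133; 175; 216; 347; 365; 412; 457; 498; 555; 579; 615; 683; 707; 752; 785];
  [:: 9; 52; 155; 219; 264; 282; 332; 344; 443; 473; 534; 546; 570; 606; 669; 675; 783; 813];
  [:: 9; 51; 180; 221; 239; 304; 374; 386; 410; 422; 492; 504; 627; 633; 711; 717; 750; 762];
  [:: 15; 54; 95; 114; 156; 222; 316; 391; 424; 469; 517; 529; 590; 638; 657; 726; 756; 801];
  [:: 15; 53; 72; 137; 179; 220; 349; 358; 406; 445; 487; 559; 575; 611; 684; 699; 738; 777];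
  [:: 9; 56; 157; 223; 268; 284; 325; 340; 460; 463; 526; 565; 580; 595; 658; 685; 781; 808];
  [:: 9; 55; 184; 225; 241; 308; 367; 382; 400; 439; 484; 523; 616; 643; 700; 727; 745; 760];
  [:: 15; 58; 99; 116; 158; 226; 335; 395; 432; 465; 519; 537; 608; 635; 654; 729; 775; 811];
  [:: 15; 57; 74; 141; 183; 224; 353; 377; 402; 453; 495; 561; 572; 629; 687; 696; 748; 796];
  [:: 9; 60; 159; 227; 272; 286; 322; 346; 454; 466; 530; 560; 569; 605; 667; 673; 787; 805];
  [:: 9; 59; 188; 229; 243; 312; 364; 388; 403; 433; 488; 518; 626; 632; 709; 715; 742; 766];
  [:: 15; 62; 103; 118; 160; 230; 328; 397; 420; 471; 524; 527; 601; 640; 661; 733; 770; 800];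
  [:: 15; 61; 76; 145; 187; 228; 355; 370; 408; 441; 485; 566; 577; 622; 691; 703; 737; 791];
  [:: 0; 21; 64; 105; 205; 289; 335; 340; 364; 471; 497; 533; 556; 603; 665; 688; 711; 801];
  [:: 0; 38; 63; 121; 190; 274; 384; 407; 439; 454; 516; 587; 623; 637; 732; 755; 769; 783];
  [:: 0; 23; 66; 107; 209; 293; 328; 346; 374; 469; 484; 540; 552; 608; 651; 692; 705; 809];
  [:: 0; 42; 65; 125; 192; 276; 394; 415; 433; 443; 506; 580; 609; 645; 728; 747; 758; 792];
  [:: 0; 25; 68; 109; 213; 297; 318; 351; 371; 482; 492; 537; 565; 590; 661; 673; 697; 815];
  [:: 0; 46; 67; 129; 194; 278; 392; 411; 423; 452; 515; 570; 618; 643; 719; 739; 766; 790];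
  [:: 0; 27; 70; 111; 217; 301; 316; 344; 375; 477; 488; 545; 563; 601; 654; 685; 695; 804];
  [:: 0; 50; 69; 133; 196; 280; 396; 418; 422; 444; 508; 569; 614; 650; 714; 735; 760; 797];
  [:: 0; 29; 72; 113; 221; 305; 331; 338; 367; 465; 501; 535; 549; 594; 670; 680; 709; 800];
  [:: 0; 54; 71; 137; 198; 282; 387; 409; 437; 460; 522; 582; 628; 639; 731; 751; 776; 787];
  [:: 0; 31; 74; 115; 225; 309; 324; 356; 357; 475; 489; 527; 560; 592; 657; 675; 704; 817];
  [:: 0; 58; 73; 141; 200; 284; 379; 399; 431; 447; 511; 576; 617; 632; 724; 744; 762; 779];
  [:: 0; 33; 76; 117; 229; 313; 323; 348; 362; 464; 499; 529; 546; 598; 668; 681; 700; 811];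
  [:: 0; 62; 75; 145; 202; 286; 383; 404; 426; 458; 520; 574; 625; 633; 721; 743; 771; 781];
  [:: 10; 78; 161; 206; 245; 273; 345; 370; 432; 451; 503; 562; 584; 649; 677; 699; 764; 780];
  [:: 10; 77; 163; 189; 247; 290; 321; 397; 402; 478; 512; 538; 593; 619; 671; 726; 752; 807];
  [:: 12; 37; 80; 106; 162; 248; 372; 400; 425; 466; 486; 599; 610; 641; 702; 736; 773; 813];
  [:: 12; 22; 79; 122; 164; 246; 325; 353; 388; 441; 521; 541; 551; 567; 655; 683; 717; 777];
  [:: 10; 82; 165; 210; 249; 275; 342; 358; 420; 448; 495; 564; 585; 642; 682; 710; 772; 788];
  [:: 10; 81; 167; 191; 251; 294; 330; 391; 408; 481; 519; 525; 597; 615; 664; 716; 754; 806];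
  [:: 12; 41; 84; 108; 166; 252; 376; 403; 430; 473; 494; 595; 612; 636; 701; 740; 774; 816];
  [:: 12; 24; 83; 126; 168; 250; 322; 355; 386; 445; 523; 543; 555; 572; 662; 678; 723; 782];
  [:: 10; 86; 169; 214; 253; 277; 354; 366; 429; 459; 487; 548; 568; 635; 689; 707; 770; 794];
  [:: 10; 85; 171; 193; 255; 298; 327; 381; 414; 462; 517; 536; 604; 629; 656; 725; 737; 818];
  [:: 12; 45; 88; 110; 170; 256; 359; 405; 435; 479; 500; 606; 616; 648; 713; 742; 757; 799];
  [:: 12; 26; 87; 130; 172; 254; 333; 336; 398; 449; 504; 526; 561; 575; 667; 691; 730; 785];
  [:: 10; 90; 173; 218; 257; 279; 352; 360; 424; 456; 485; 558; 581; 630; 679; 712; 775; 784];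
  [:: 10; 89; 175; 195; 259; 302; 334; 378; 406; 474; 524; 528; 596; 624; 652; 718; 748; 814];
  [:: 12; 49; 92; 112; 174; 260; 369; 410; 427; 468; 490; 605; 620; 647; 708; 745; 768; 812];
  [:: 12; 28; 91; 134; 176; 258; 332; 349; 393; 450; 518; 539; 554; 577; 658; 687; 722; 786];
  [:: 10; 94; 177; 222; 261; 281; 341; 377; 440; 446; 498; 553; 573; 646; 672; 703; 765; 778];
  [:: 10; 93; 179; 197; 263; 306; 326; 395; 401; 470; 513; 544; 588; 613; 666; 733; 741; 802];
  [:: 12; 53; 96; 114; 178; 264; 363; 413; 421; 463; 483; 591; 621; 634; 698; 749; 763; 805];
  [:: 12; 30; 95; 138; 180; 262; 320; 343; 382; 453; 510; 531; 547; 579; 653; 676; 715; 791];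
  [:: 10; 98; 181; 226; 265; 283; 350; 365; 428; 455; 493; 550; 571; 640; 690; 693; 756; 795];
  [:: 10; 97; 183; 199; 267; 310; 317; 389; 419; 467; 505; 532; 607; 622; 660; 720; 738; 810];
  [:: 12; 57; 100; 116; 182; 268; 361; 416; 438; 480; 502; 600; 626; 644; 706; 750; 759; 803];
  [:: 12; 32; 99; 142; 184; 266; 329; 339; 390; 457; 507; 530; 566; 583; 669; 684; 734; 793];
  [:: 10; 102; 185; 230; 269; 285; 337; 373; 436; 442; 491; 557; 578; 638; 686; 696; 761; 789];
  [:: 10; 101; 187; 201; 271; 314; 319; 385; 412; 472; 509; 542; 602; 611; 659; 729; 746; 798];
  [:: 12; 61; 104; 118; 186; 272; 368; 417; 434; 476; 496; 589; 627; 631; 694; 753; 767; 808];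
  [:: 12; 34; 103; 146; 188; 270; 315; 347; 380; 461; 514; 534; 559; 586; 663; 674; 727; 796];
  [:: 6; 21; 63; 106; 203; 245; 322; 377; 382; 408; 491; 514; 539; 624; 669; 707; 730; 738];
  [:: 6; 37; 79; 105; 189; 231; 342; 433; 460; 470; 558; 574; 602; 650; 690; 762; 790; 818];
  [:: 6; 23; 65; 108; 207; 249; 332; 370; 388; 406; 498; 510; 526; 629; 663; 693; 734; 746];
  [:: 6; 41; 83; 107; 191; 233; 352; 422; 454; 478; 548; 582; 588; 643; 686; 771; 779; 810];
  [:: 6; 25; 67; 110; 211; 253; 329; 360; 393; 419; 495; 523; 534; 611; 655; 703; 715; 752];
  [:: 6; 45; 87; 109; 193; 235; 350; 431; 444; 474; 557; 580; 597; 633; 677; 769; 787; 802];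
  [:: 6; 27; 69; 112; 215; 257; 333; 358; 386; 414; 503; 521; 530; 622; 653; 696; 727; 741];
  [:: 6; 49; 91; 111; 195; 237; 354; 423; 443; 481; 550; 587; 593; 632; 672; 776; 781; 798];
  [:: 6; 29; 71; 114; 219; 261; 325; 373; 380; 402; 493; 507; 543; 615; 667; 712; 722; 737];
  [:: 6; 53; 95; 113; 197; 239; 345; 439; 458; 472; 564; 576; 607; 645; 689; 766; 797; 814];
  [:: 6; 31; 73; 116; 223; 265; 315; 366; 398; 412; 485; 518; 531; 613; 662; 699; 717; 754];
  [:: 6; 57; 99; 115; 199; 241; 337; 426; 452; 462; 553; 569; 596; 639; 682; 758; 783; 807];
  [:: 6; 33; 75; 118; 227; 269; 320; 365; 390; 401; 487; 504; 541; 619; 658; 710; 723; 748];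
  [:: 6; 61; 103; 117; 201; 243; 341; 437; 447; 467; 562; 570; 604; 637; 679; 760; 792; 806];
  [:: 11; 120; 162; 204; 232; 289; 328; 387; 430; 453; 520; 545; 586; 647; 657; 719; 759; 785];
  [:: 11; 119; 148; 190; 246; 287; 355; 363; 415; 465; 496; 554; 598; 614; 684; 713; 744; 815];
  [:: 18; 38; 64; 122; 161; 288; 330; 403; 446; 463; 528; 578; 589; 620; 660; 750; 794; 799];
  [:: 18; 22; 80; 121; 147; 290; 346; 367; 395; 420; 499; 509; 563; 630; 675; 697; 725; 756];
  [:: 11; 124; 166; 208; 234; 293; 316; 384; 427; 441; 522; 537; 579; 648; 668; 724; 767; 793];
  [:: 11; 123; 150; 192; 250; 291; 349; 372; 418; 471; 483; 561; 594; 618; 674; 706; 743; 817];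
  [:: 18; 42; 66; 126; 165; 292; 334; 410; 451; 466; 536; 573; 591; 616; 659; 753; 795; 803];
  [:: 18; 24; 84; 125; 149; 294; 344; 364; 397; 424; 501; 513; 565; 635; 681; 704; 720; 761];
  [:: 11; 128; 170; 212; 236; 297; 324; 396; 438; 450; 506; 529; 572; 631; 665; 731; 773; 791];
  [:: 11; 127; 152; 194; 254; 295; 339; 369; 399; 477; 494; 559; 608; 625; 683; 698; 755; 800];
  [:: 18; 46; 68; 130; 169; 296; 317; 416; 456; 468; 542; 585; 595; 627; 671; 736; 778; 805];
  [:: 18; 26; 88; 129; 151; 298; 356; 375; 378; 428; 484; 519; 546; 638; 688; 709; 733; 764];
  [:: 11; 132; 174; 216; 238; 301; 318; 394; 435; 445; 516; 527; 567; 644; 670; 721; 763; 796];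
  [:: 11; 131; 154; 196; 258; 299; 336; 376; 411; 469; 486; 566; 603; 617; 676; 694; 751; 811];
  [:: 18; 50; 70; 134; 173; 300; 327; 405; 448; 473; 532; 584; 599; 626; 666; 749; 789; 808];
  [:: 18; 28; 92; 133; 153; 302; 351; 374; 391; 429; 497; 512; 560; 640; 680; 700; 729; 765];
  [:: 11; 136; 178; 220; 240; 305; 335; 383; 425; 461; 511; 540; 583; 636; 661; 714; 757; 786];
  [:: 11; 135; 156; 198; 262; 303; 353; 368; 407; 464; 502; 555; 592; 609; 691; 708; 739; 804];
  [:: 18; 54; 72; 138; 177; 304; 321; 400; 442; 476; 525; 571; 600; 612; 656; 742; 784; 812];
  [:: 18; 30; 96; 137; 155; 306; 340; 362; 385; 432; 489; 505; 552; 642; 673; 695; 718; 770];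
  [:: 11; 140; 182; 224; 242; 309; 323; 392; 434; 449; 508; 535; 577; 634; 651; 732; 774; 777];
  [:: 11; 139; 158; 200; 266; 307; 347; 359; 404; 482; 490; 547; 601; 628; 678; 702; 747; 801];
  [:: 18; 58; 74; 142; 181; 308; 319; 417; 459; 479; 544; 581; 605; 621; 664; 740; 780; 813];
  [:: 18; 32; 100; 141; 157; 310; 348; 371; 381; 436; 488; 524; 549; 646; 692; 711; 726; 772];
  [:: 11; 144; 186; 228; 244; 313; 331; 379; 421; 457; 515; 533; 575; 641; 654; 728; 768; 782];
  [:: 11; 143; 160; 202; 270; 311; 343; 361; 409; 475; 500; 551; 590; 623; 687; 701; 735; 809];
  [:: 18; 62; 76; 146; 185; 312; 326; 413; 455; 480; 538; 568; 606; 610; 652; 745; 788; 816];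
  [:: 18; 34; 104; 145; 159; 314; 338; 357; 389; 440; 492; 517; 556; 649; 685; 705; 716; 775];
  [:: 1; 35; 122; 148; 203; 290; 373; 434; 457; 481; 487; 572; 596; 648; 703; 763; 786; 810];
  [:: 1; 37; 120; 147; 206; 287; 326; 350; 398; 410; 510; 542; 564; 626; 656; 679; 727; 740];
  [:: 1; 39; 126; 150; 207; 294; 377; 421; 461; 474; 493; 577; 604; 644; 699; 773; 785; 798];
  [:: 1; 41; 124; 149; 210; 291; 321; 337; 390; 405; 521; 544; 558; 627; 660; 689; 715; 745];
  [:: 1; 43; 130; 152; 211; 298; 358; 430; 441; 467; 498; 583; 602; 634; 712; 768; 796; 807];
  [:: 1; 45; 128; 151; 214; 295; 334; 345; 382; 417; 518; 525; 550; 610; 666; 686; 723; 750];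
  [:: 1; 47; 134; 154; 215; 302; 370; 425; 453; 462; 491; 575; 607; 631; 710; 774; 793; 802];
  [:: 1; 49; 132; 153; 218; 299; 330; 341; 380; 416; 523; 538; 548; 621; 659; 690; 717; 742];
  [:: 1; 51; 138; 156; 219; 306; 365; 438; 449; 478; 485; 567; 597; 647; 696; 767; 782; 818];
  [:: 1; 53; 136; 155; 222; 303; 319; 354; 393; 403; 514; 532; 562; 616; 652; 682; 734; 736];
  [:: 1; 55; 142; 158; 223; 310; 360; 427; 445; 472; 503; 586; 588; 641; 707; 757; 791; 806];
  [:: 1; 57; 140; 157; 226; 307; 327; 342; 388; 413; 504; 528; 557; 612; 671; 672; 722; 753];
  [:: 1; 59; 146; 160; 227; 314; 366; 435; 450; 470; 495; 579; 593; 636; 693; 759; 777; 814];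
  [:: 1; 61; 144; 159; 230; 311; 317; 352; 386; 400; 507; 536; 553; 620; 664; 677; 730; 749];
  [:: 4; 77; 121; 162; 245; 288; 320; 339; 426; 469; 534; 555; 601; 643; 667; 687; 776; 817];
  [:: 4; 79; 119; 161; 248; 289; 362; 381; 406; 447; 492; 513; 580; 622; 709; 729; 754; 797];
  [:: 7; 38; 78; 164; 204; 247; 356; 368; 392; 473; 500; 522; 552; 605; 685; 698; 721; 803];
  [:: 7; 36; 80; 163; 205; 246; 331; 418; 436; 455; 529; 585; 617; 635; 661; 747; 765; 784];
  [:: 4; 81; 125; 166; 249; 292; 325; 347; 437; 477; 531; 554; 590; 632; 669; 691; 769; 811];
  [:: 4; 83; 123; 165; 252; 293; 367; 389; 414; 458; 489; 512; 569; 611; 711; 733; 748; 790];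
  [:: 7; 42; 82; 168; 208; 251; 348; 363; 379; 468; 502; 516; 563; 606; 673; 702; 731; 808];
  [:: 7; 40; 84; 167; 209; 250; 335; 411; 440; 442; 535; 581; 625; 640; 657; 735; 764; 794];
  [:: 4; 85; 129; 170; 253; 296; 332; 353; 433; 475; 543; 566; 598; 639; 653; 674; 760; 801];
  [:: 4; 87; 127; 169; 256; 297; 374; 395; 412; 454; 501; 524; 576; 619; 695; 716; 738; 781];
  [:: 7; 46; 86; 172; 212; 255; 340; 376; 387; 480; 483; 508; 560; 589; 681; 708; 728; 813];
  [:: 7; 44; 88; 171; 213; 254; 316; 404; 420; 451; 540; 571; 623; 646; 670; 744; 775; 789];
  [:: 4; 89; 133; 174; 257; 300; 322; 343; 439; 482; 541; 561; 592; 633; 663; 684; 758; 800];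
  [:: 4; 91; 131; 173; 260; 301; 364; 385; 419; 460; 499; 519; 570; 613; 705; 726; 737; 779];
  [:: 7; 50; 90; 176; 216; 259; 338; 372; 383; 479; 496; 506; 565; 600; 675; 701; 732; 805];
  [:: 7; 48; 92; 175; 217; 258; 328; 399; 432; 446; 533; 568; 628; 638; 668; 739; 772; 795];
  [:: 4; 93; 137; 178; 261; 304; 315; 336; 431; 471; 530; 551; 608; 650; 658; 678; 771; 815];
  [:: 4; 95; 135; 177; 264; 305; 357; 378; 408; 452; 488; 509; 587; 629; 700; 720; 752; 792];
  [:: 7; 54; 94; 180; 220; 263; 351; 361; 396; 466; 490; 520; 556; 595; 692; 694; 724; 799];
  [:: 7; 52; 96; 179; 221; 262; 323; 415; 428; 459; 527; 584; 618; 630; 654; 755; 761; 788];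
  [:: 4; 97; 141; 182; 265; 308; 333; 355; 422; 464; 539; 559; 594; 637; 655; 676; 766; 809];
  [:: 4; 99; 139; 181; 268; 309; 375; 397; 401; 443; 497; 517; 574; 615; 697; 718; 746; 787];
  [:: 7; 58; 98; 184; 224; 267; 346; 369; 384; 476; 486; 515; 546; 591; 680; 713; 714; 816];
  [:: 7; 56; 100; 183; 225; 266; 318; 409; 424; 448; 545; 578; 609; 649; 665; 743; 770; 778];
  [:: 4; 101; 145; 186; 269; 312; 329; 349; 423; 465; 526; 547; 603; 645; 662; 683; 762; 804];
  [:: 4; 103; 143; 185; 272; 313; 371; 391; 402; 444; 484; 505; 582; 624; 704; 725; 741; 783];
  [:: 7; 62; 102; 188; 228; 271; 344; 359; 394; 463; 494; 511; 549; 599; 688; 706; 719; 812];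
  [:: 7; 60; 104; 187; 229; 270; 324; 407; 429; 456; 537; 573; 614; 642; 651; 751; 756; 780];
  [:: 5; 78; 106; 190; 231; 290; 324; 338; 417; 445; 540; 546; 577; 616; 654; 673; 749; 793];
  [:: 5; 64; 120; 189; 246; 274; 366; 380; 424; 480; 498; 504; 595; 640; 696; 715; 772; 812];
  [:: 5; 82; 108; 192; 233; 294; 323; 340; 413; 450; 545; 549; 575; 626; 661; 675; 736; 796];
  [:: 5; 66; 124; 191; 250; 276; 365; 382; 429; 476; 503; 507; 605; 638; 703; 717; 775; 799];
  [:: 5; 86; 110; 194; 235; 298; 335; 344; 403; 457; 527; 552; 586; 621; 668; 680; 745; 777];
  [:: 5; 68; 128; 193; 254; 278; 377; 386; 436; 466; 485; 510; 600; 649; 710; 722; 756; 808];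
  [:: 5; 90; 112; 196; 237; 302; 331; 346; 400; 449; 537; 556; 583; 627; 657; 681; 740; 791];
  [:: 5; 70; 132; 195; 258; 280; 373; 388; 428; 463; 495; 514; 606; 646; 699; 723; 770; 803];
  [:: 5; 94; 114; 198; 239; 306; 318; 348; 416; 441; 533; 560; 572; 620; 651; 685; 753; 785];
  [:: 5; 72; 136; 197; 262; 282; 360; 390; 420; 479; 491; 518; 599; 635; 693; 727; 764; 816];
  [:: 5; 98; 116; 200; 241; 310; 328; 351; 410; 461; 529; 563; 579; 610; 670; 688; 742; 782];
  [:: 5; 74; 140; 199; 266; 284; 370; 393; 440; 473; 487; 521; 589; 642; 712; 730; 761; 805];
  [:: 5; 102; 118; 202; 243; 314; 316; 356; 405; 453; 535; 565; 567; 612; 665; 692; 750; 786];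
  [:: 5; 76; 144; 201; 270; 286; 358; 398; 432; 468; 493; 523; 591; 630; 707; 734; 765; 813];
  [:: 13; 35; 105; 147; 204; 245; 385; 404; 448; 475; 517; 581; 608; 618; 733; 751; 795; 804];
  [:: 13; 38; 119; 163; 203; 232; 317; 341; 371; 422; 501; 525; 557; 632; 652; 689; 700; 758];
  [:: 19; 36; 63; 164; 206; 289; 343; 412; 427; 467; 559; 597; 629; 644; 691; 741; 774; 814];
  [:: 19; 37; 77; 148; 205; 273; 329; 359; 383; 443; 483; 515; 543; 569; 658; 694; 731; 779];
  [:: 13; 39; 107; 149; 208; 249; 395; 409; 456; 464; 505; 568; 601; 617; 726; 755; 789; 815];
  [:: 13; 42; 123; 167; 207; 234; 319; 345; 357; 423; 497; 528; 553; 633; 656; 690; 709; 760];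
  [:: 19; 40; 65; 168; 210; 293; 353; 401; 435; 472; 547; 596; 622; 631; 684; 752; 768; 818];
  [:: 19; 41; 81; 150; 209; 275; 315; 361; 387; 444; 486; 511; 539; 570; 667; 698; 732; 781];
  [:: 13; 43; 109; 151; 212; 253; 391; 415; 455; 471; 513; 578; 592; 628; 718; 735; 780; 811];
  [:: 13; 46; 127; 171; 211; 236; 321; 352; 367; 426; 488; 532; 564; 637; 659; 672; 705; 762];
  [:: 19; 44; 67; 172; 214; 297; 349; 408; 434; 478; 555; 607; 613; 641; 676; 748; 759; 798];
  [:: 19; 45; 85; 152; 213; 277; 325; 363; 394; 447; 490; 522; 530; 574; 663; 701; 714; 783];
  [:: 13; 47; 111; 153; 216; 257; 397; 407; 459; 465; 509; 571; 590; 625; 716; 747; 778; 817];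
  [:: 13; 50; 131; 175; 215; 238; 326; 342; 362; 431; 484; 536; 562; 639; 660; 686; 711; 766];
  [:: 19; 48; 69; 176; 218; 301; 355; 402; 438; 470; 551; 604; 611; 634; 674; 754; 757; 810];
  [:: 19; 49; 89; 154; 217; 279; 320; 368; 384; 452; 494; 520; 526; 576; 669; 702; 728; 787];
  [:: 13; 51; 113; 155; 220; 261; 389; 399; 451; 482; 524; 585; 603; 614; 729; 743; 794; 809];
  [:: 13; 54; 135; 179; 219; 240; 327; 337; 375; 433; 499; 538; 550; 643; 664; 679; 704; 769];
  [:: 19; 52; 71; 180; 222; 305; 347; 419; 430; 462; 566; 593; 624; 648; 687; 746; 773; 806];
  [:: 19; 53; 93; 156; 221; 281; 333; 369; 379; 454; 496; 508; 541; 580; 662; 706; 721; 790];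
  [:: 13; 55; 115; 157; 224; 265; 378; 418; 442; 469; 512; 573; 598; 623; 725; 739; 788; 800];
  [:: 13; 58; 139; 183; 223; 242; 330; 354; 364; 437; 492; 542; 558; 645; 666; 677; 695; 771];
  [:: 19; 56; 73; 184; 226; 309; 336; 406; 421; 481; 554; 602; 619; 636; 683; 737; 767; 802];
  [:: 19; 57; 97; 158; 225; 283; 322; 372; 396; 458; 500; 516; 534; 582; 653; 708; 719; 792];
  [:: 13; 59; 117; 159; 228; 269; 381; 411; 446; 477; 519; 584; 594; 609; 720; 744; 784; 801];
  [:: 13; 62; 143; 187; 227; 244; 334; 350; 374; 439; 489; 544; 548; 650; 671; 682; 697; 776];
  [:: 19; 60; 75; 188; 230; 313; 339; 414; 425; 474; 561; 588; 615; 647; 678; 738; 763; 807];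
  [:: 19; 61; 101; 160; 229; 285; 332; 376; 392; 460; 502; 506; 531; 587; 655; 713; 724; 797];
  [:: 2; 36; 106; 189; 232; 288; 347; 361; 391; 442; 494; 524; 561; 568; 676; 708; 720; 778];
  [:: 2; 22; 119; 204; 231; 273; 332; 401; 428; 479; 530; 591; 611; 642; 662; 737; 775; 808];
  [:: 2; 40; 108; 191; 234; 292; 343; 368; 378; 446; 490; 517; 566; 571; 683; 713; 729; 780];
  [:: 2; 24; 123; 208; 233; 275; 333; 402; 436; 480; 534; 599; 613; 630; 658; 738; 770; 805];
  [:: 2; 44; 110; 193; 236; 296; 355; 372; 389; 448; 502; 509; 547; 573; 687; 694; 726; 784];
  [:: 2; 26; 127; 212; 235; 277; 315; 406; 432; 463; 541; 605; 615; 640; 669; 741; 761; 816];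
  [:: 2; 48; 112; 195; 238; 300; 353; 363; 381; 451; 500; 505; 559; 578; 678; 706; 733; 788];
  [:: 2; 28; 131; 216; 237; 279; 329; 408; 440; 476; 531; 595; 619; 635; 667; 746; 756; 813];
  [:: 2; 52; 114; 197; 240; 304; 339; 359; 397; 455; 486; 519; 554; 581; 674; 701; 725; 789];
  [:: 2; 30; 135; 220; 239; 281; 322; 412; 429; 468; 526; 589; 622; 649; 655; 748; 772; 803];
  [:: 2; 56; 116; 199; 242; 308; 349; 376; 385; 456; 496; 513; 551; 584; 691; 698; 716; 794];
  [:: 2; 32; 139; 224; 241; 283; 320; 414; 420; 466; 543; 606; 624; 638; 663; 752; 765; 812];
  [:: 2; 60; 118; 201; 244; 312; 336; 369; 395; 459; 483; 512; 555; 585; 684; 702; 718; 795];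
  [:: 2; 34; 143; 228; 243; 285; 325; 419; 424; 473; 539; 600; 629; 646; 653; 754; 764; 799];
  [:: 16; 77; 105; 161; 203; 246; 348; 394; 413; 438; 508; 565; 627; 636; 680; 724; 742; 768];
  [:: 16; 80; 120; 164; 190; 245; 334; 357; 458; 462; 484; 532; 570; 588; 664; 695; 787; 798];
  [:: 20; 21; 78; 163; 248; 287; 386; 431; 461; 482; 518; 575; 594; 645; 734; 760; 791; 811];
  [:: 20; 35; 79; 162; 247; 274; 316; 337; 365; 409; 495; 527; 548; 625; 651; 672; 712; 739];
  [:: 16; 81; 107; 165; 207; 250; 338; 396; 400; 434; 515; 560; 621; 647; 688; 721; 750; 757];
  [:: 16; 84; 124; 168; 192; 249; 327; 362; 460; 467; 488; 542; 576; 593; 652; 697; 783; 802];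
  [:: 20; 23; 82; 167; 252; 291; 393; 426; 453; 475; 504; 583; 603; 650; 727; 766; 777; 800];
  [:: 20; 39; 83; 166; 251; 276; 318; 341; 373; 407; 485; 529; 550; 628; 654; 677; 707; 744];
  [:: 16; 85; 109; 169; 211; 254; 346; 379; 410; 425; 520; 549; 612; 644; 685; 732; 749; 767];
  [:: 16; 88; 128; 172; 194; 253; 319; 364; 443; 470; 489; 538; 582; 596; 660; 700; 797; 806];
  [:: 20; 25; 86; 171; 256; 295; 390; 439; 445; 465; 514; 579; 601; 632; 717; 771; 786; 809];
  [:: 20; 43; 87; 170; 255; 278; 323; 342; 370; 418; 493; 533; 553; 609; 657; 679; 696; 751];
  [:: 16; 89; 111; 173; 215; 258; 340; 392; 403; 421; 511; 546; 610; 648; 692; 731; 753; 759];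
  [:: 16; 92; 132; 176; 196; 257; 317; 367; 454; 472; 492; 544; 574; 597; 656; 704; 792; 807];
  [:: 20; 27; 90; 175; 260; 299; 398; 437; 441; 464; 507; 586; 608; 643; 715; 762; 782; 801];
  [:: 20; 47; 91; 174; 259; 280; 324; 345; 377; 415; 487; 535; 557; 623; 661; 682; 693; 743];
  [:: 16; 93; 113; 177; 219; 262; 356; 384; 417; 435; 506; 563; 626; 641; 681; 719; 745; 774];
  [:: 16; 96; 136; 180; 198; 261; 330; 371; 447; 474; 497; 536; 569; 602; 671; 705; 781; 810];
  [:: 20; 29; 94; 179; 264; 303; 388; 423; 457; 477; 523; 577; 598; 637; 730; 758; 796; 817];
  [:: 20; 51; 95; 178; 263; 282; 328; 350; 366; 404; 503; 537; 558; 617; 665; 686; 710; 735];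
  [:: 16; 97; 115; 181; 223; 266; 344; 383; 405; 430; 522; 556; 620; 631; 673; 728; 736; 763];
  [:: 16; 100; 140; 184; 200; 265; 326; 374; 444; 478; 499; 525; 587; 604; 659; 709; 790; 814];
  [:: 20; 31; 98; 183; 268; 307; 380; 433; 450; 471; 510; 567; 590; 633; 723; 776; 785; 804];
  [:: 20; 55; 99; 182; 267; 284; 331; 352; 358; 411; 491; 540; 562; 614; 668; 689; 703; 755];
  [:: 16; 101; 117; 185; 227; 270; 351; 387; 416; 427; 516; 552; 616; 634; 675; 714; 740; 773];
  [:: 16; 104; 144; 188; 202; 269; 321; 375; 452; 481; 501; 528; 580; 607; 666; 711; 779; 818];
  [:: 20; 33; 102; 187; 272; 311; 382; 422; 449; 469; 521; 572; 592; 639; 722; 769; 793; 815];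
  [:: 20; 59; 103; 186; 271; 286; 335; 354; 360; 399; 498; 545; 564; 618; 670; 690; 699; 747];
  [:: 8; 22; 77; 206; 232; 274; 374; 416; 449; 464; 488; 579; 590; 612; 704; 745; 796; 800];
  [:: 8; 35; 64; 190; 248; 273; 319; 349; 389; 421; 519; 536; 566; 631; 666; 678; 718; 757];
  [:: 8; 24; 81; 210; 234; 276; 375; 417; 457; 465; 492; 567; 592; 620; 700; 742; 791; 801];
  [:: 8; 39; 66; 192; 252; 275; 326; 336; 385; 425; 524; 532; 559; 634; 671; 687; 725; 759];
  [:: 8; 26; 85; 214; 236; 278; 357; 400; 453; 469; 499; 577; 594; 626; 711; 753; 782; 804];
  [:: 8; 43; 68; 194; 256; 277; 330; 347; 397; 427; 505; 544; 551; 636; 652; 684; 729; 763];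
  [:: 8; 28; 89; 218; 238; 280; 371; 413; 461; 471; 489; 572; 598; 616; 709; 750; 777; 809];
  [:: 8; 47; 70; 196; 260; 279; 321; 339; 395; 430; 517; 542; 547; 641; 664; 691; 720; 767];
  [:: 8; 30; 93; 222; 240; 282; 364; 405; 450; 475; 484; 586; 601; 610; 697; 740; 793; 811];
  [:: 8; 51; 72; 198; 264; 281; 317; 355; 381; 434; 512; 528; 561; 644; 659; 683; 716; 768];
  [:: 8; 32; 97; 226; 242; 284; 362; 403; 441; 477; 501; 575; 603; 627; 705; 749; 786; 815];
  [:: 8; 55; 74; 200; 268; 283; 334; 343; 391; 435; 509; 538; 555; 647; 656; 674; 733; 773];
  [:: 8; 34; 101; 230; 244; 286; 367; 410; 445; 482; 497; 583; 608; 621; 695; 736; 785; 817];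
  [:: 8; 59; 76; 202; 272; 285; 327; 353; 378; 438; 513; 525; 554; 648; 660; 676; 726; 774];
  [:: 14; 21; 120; 148; 247; 288; 344; 419; 440; 452; 560; 582; 615; 638; 692; 748; 770; 781];
  [:: 14; 36; 121; 161; 231; 287; 323; 358; 379; 472; 485; 506; 537; 604; 670; 693; 714; 802];
  [:: 17; 63; 119; 162; 205; 290; 352; 390; 459; 476; 523; 550; 573; 606; 682; 722; 789; 805];
  [:: 17; 78; 122; 147; 189; 289; 315; 376; 399; 437; 490; 526; 609; 633; 653; 706; 735; 766];
  [:: 14; 23; 124; 150; 251; 292; 351; 412; 432; 447; 546; 587; 624; 646; 685; 737; 756; 787];
  [:: 14; 40; 125; 165; 233; 291; 331; 360; 383; 470; 487; 508; 527; 607; 665; 696; 719; 807];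
  [:: 17; 65; 123; 166; 209; 294; 354; 380; 455; 463; 518; 557; 584; 600; 679; 730; 778; 813];
  [:: 17; 82; 126; 149; 191; 293; 320; 369; 404; 439; 500; 530; 614; 639; 655; 694; 739; 762];
  [:: 14; 25; 128; 152; 255; 296; 348; 402; 424; 460; 556; 569; 622; 642; 675; 746; 765; 792];
  [:: 14; 44; 129; 169; 235; 295; 328; 365; 384; 481; 491; 511; 535; 588; 654; 699; 721; 814];
  [:: 17; 67; 127; 170; 213; 298; 337; 388; 446; 473; 507; 562; 581; 591; 690; 727; 788; 812];
  [:: 17; 86; 130; 151; 193; 297; 322; 361; 407; 422; 496; 531; 617; 645; 658; 702; 743; 776];
  [:: 14; 27; 132; 154; 259; 300; 356; 401; 420; 458; 549; 580; 629; 649; 673; 738; 761; 783];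
  [:: 14; 48; 133; 173; 237; 299; 335; 366; 387; 478; 493; 515; 529; 602; 651; 703; 724; 806];
  [:: 17; 69; 131; 174; 217; 302; 350; 382; 442; 466; 504; 553; 585; 589; 689; 734; 780; 816];
  [:: 17; 90; 134; 153; 195; 301; 325; 359; 409; 433; 502; 534; 618; 637; 662; 698; 744; 771];
  [:: 14; 29; 136; 156; 263; 304; 346; 414; 436; 444; 565; 574; 619; 640; 688; 754; 775; 779];
  [:: 14; 52; 137; 177; 239; 303; 324; 370; 392; 467; 495; 516; 545; 596; 668; 707; 728; 798];
  [:: 17; 71; 135; 178; 221; 306; 342; 398; 456; 480; 521; 548; 578; 605; 677; 723; 795; 808];
  [:: 17; 94; 138; 155; 197; 305; 329; 372; 411; 426; 494; 539; 623; 632; 663; 713; 747; 760];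
  [:: 14; 31; 140; 158; 267; 308; 338; 408; 429; 454; 552; 570; 611; 630; 681; 741; 764; 797];
  [:: 14; 56; 141; 181; 241; 307; 316; 373; 394; 474; 498; 520; 533; 593; 661; 710; 731; 818];
  [:: 17; 73; 139; 182; 225; 310; 341; 386; 451; 468; 514; 564; 568; 599; 686; 715; 784; 799];
  [:: 17; 98; 142; 157; 199; 309; 332; 368; 415; 423; 483; 541; 625; 650; 667; 701; 751; 769];
  [:: 14; 33; 144; 160; 271; 312; 340; 406; 428; 443; 563; 576; 613; 635; 680; 752; 772; 790];
  [:: 14; 60; 145; 185; 243; 311; 318; 377; 396; 462; 503; 522; 540; 597; 657; 712; 732; 810];
  [:: 17; 75; 143; 186; 229; 314; 345; 393; 448; 479; 510; 558; 571; 595; 672; 717; 794; 803];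
  [:: 17; 102; 146; 159; 201; 313; 333; 363; 418; 431; 486; 543; 628; 643; 669; 708; 755; 758];
  [:: 47; 104; 115; 177; 210; 236; 290; 316; 317; 327; 331; 348; 485; 609; 732; 761; 796; 815];
  [:: 53; 69; 123; 172; 201; 248; 308; 315; 317; 322; 326; 391; 427; 451; 474; 548; 695; 750];
  [:: 23; 98; 129; 160; 204; 258; 282; 315; 316; 320; 335; 359; 419; 507; 574; 595; 632; 683];
  [:: 37; 67; 131; 184; 197; 252; 312; 319; 320; 321; 332; 378; 435; 448; 462; 550; 697; 753];
  [:: 27; 102; 141; 156; 208; 254; 274; 318; 320; 325; 328; 361; 412; 514; 582; 605; 633; 678];
  [:: 43; 96; 117; 161; 218; 242; 294; 317; 318; 319; 335; 338; 487; 614; 728; 765; 791; 817];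
  [:: 31; 78; 137; 150; 212; 270; 280; 318; 322; 323; 332; 363; 402; 521; 580; 600; 637; 691];
  [:: 59; 84; 105; 173; 226; 240; 298; 316; 321; 323; 326; 346; 491; 617; 719; 772; 782; 800];
  [:: 49; 75; 139; 180; 191; 256; 288; 321; 322; 329; 334; 389; 434; 459; 472; 553; 700; 736];
  [:: 41; 73; 127; 188; 189; 260; 304; 325; 326; 330; 333; 381; 438; 456; 467; 557; 704; 749];
  [:: 55; 80; 113; 165; 214; 244; 302; 319; 324; 326; 328; 340; 493; 618; 714; 764; 777; 811];
  [:: 25; 94; 145; 148; 216; 266; 276; 316; 322; 324; 325; 368; 401; 510; 587; 606; 639; 687];
  [:: 21; 86; 133; 158; 220; 250; 286; 315; 328; 329; 331; 369; 414; 504; 576; 599; 643; 676];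
  [:: 61; 65; 119; 176; 199; 264; 296; 319; 325; 327; 329; 397; 430; 446; 481; 558; 705; 742];
  [:: 39; 100; 109; 185; 206; 238; 306; 323; 327; 328; 334; 356; 495; 623; 731; 756; 793; 804];
  [:: 33; 82; 121; 154; 224; 262; 278; 324; 331; 332; 333; 372; 408; 523; 569; 589; 645; 684];
  [:: 45; 71; 143; 164; 195; 268; 292; 315; 327; 330; 332; 385; 421; 455; 470; 562; 709; 740];
  [:: 51; 92; 107; 169; 230; 232; 310; 318; 321; 330; 331; 344; 498; 625; 724; 775; 786; 801];
  [:: 35; 88; 111; 181; 222; 234; 314; 324; 330; 334; 335; 351; 503; 628; 721; 770; 785; 809];
  [:: 29; 90; 125; 152; 228; 246; 284; 323; 329; 333; 335; 376; 406; 518; 570; 591; 650; 674];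
  [:: 57; 63; 135; 168; 193; 272; 300; 317; 320; 333; 334; 395; 425; 442; 478; 564; 711; 745];
  [:: 38; 88; 132; 177; 225; 243; 276; 337; 338; 344; 345; 360; 411; 459; 481; 532; 730; 771];
  [:: 28; 101; 116; 150; 220; 248; 297; 336; 338; 340; 355; 379; 436; 499; 569; 591; 627; 651];
  [:: 43; 71; 146; 175; 189; 249; 307; 320; 336; 337; 350; 353; 517; 647; 701; 741; 793; 800];
  [:: 42; 100; 128; 161; 229; 239; 280; 340; 341; 342; 351; 366; 399; 455; 474; 542; 734; 776];
  [:: 55; 63; 138; 171; 191; 257; 311; 325; 337; 339; 341; 355; 505; 648; 708; 752; 796; 801];
  [:: 26; 93; 118; 154; 204; 252; 309; 339; 340; 346; 349; 383; 440; 501; 570; 599; 621; 654];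
  [:: 34; 81; 106; 158; 216; 256; 305; 339; 343; 344; 351; 384; 420; 484; 574; 605; 612; 657];
  [:: 46; 96; 144; 173; 205; 233; 284; 342; 344; 348; 354; 373; 409; 446; 467; 538; 715; 758];
  [:: 51; 69; 126; 187; 193; 265; 287; 332; 336; 342; 343; 345; 513; 631; 706; 748; 777; 804];
  [:: 32; 77; 114; 152; 208; 260; 313; 336; 344; 346; 347; 387; 432; 497; 576; 595; 610; 661];
  [:: 59; 65; 122; 183; 195; 253; 303; 322; 341; 345; 347; 349; 509; 644; 713; 754; 791; 809];
  [:: 50; 104; 140; 165; 221; 231; 278; 345; 346; 352; 356; 365; 404; 442; 462; 544; 727; 769];
  [:: 47; 75; 142; 167; 197; 245; 295; 315; 343; 349; 350; 354; 524; 636; 702; 746; 785; 811];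
  [:: 54; 92; 124; 185; 213; 241; 274; 341; 346; 348; 350; 358; 418; 456; 478; 536; 722; 762];
  [:: 24; 97; 110; 148; 228; 264; 301; 338; 348; 349; 353; 392; 428; 489; 580; 589; 626; 665];
  [:: 35; 67; 134; 179; 199; 269; 291; 333; 339; 342; 352; 353; 512; 634; 694; 737; 782; 815];
  [:: 30; 89; 108; 160; 212; 268; 289; 347; 351; 353; 356; 394; 424; 488; 582; 606; 620; 668];
  [:: 58; 80; 136; 169; 209; 237; 286; 338; 350; 351; 352; 377; 407; 451; 472; 525; 717; 760];
  [:: 22; 85; 112; 156; 224; 272; 293; 343; 348; 355; 356; 396; 429; 492; 587; 600; 616; 670];
  [:: 62; 84; 120; 181; 217; 235; 282; 337; 340; 354; 356; 370; 415; 448; 470; 528; 723; 766];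
  [:: 39; 73; 130; 163; 201; 261; 299; 329; 347; 352; 354; 355; 519; 641; 698; 738; 786; 817];
  [:: 48; 73; 146; 178; 208; 246; 277; 358; 359; 369; 373; 390; 527; 588; 690; 752; 775; 782];
  [:: 54; 81; 111; 151; 202; 268; 288; 349; 357; 359; 364; 368; 411; 430; 448; 506; 653; 813];
  [:: 23; 87; 140; 187; 206; 239; 302; 317; 357; 358; 362; 377; 482; 549; 569; 616; 637; 725];
  [:: 38; 89; 109; 157; 198; 272; 292; 336; 361; 362; 363; 374; 399; 427; 456; 508; 655; 816];
  [:: 27; 99; 144; 179; 210; 231; 298; 319; 360; 362; 367; 370; 475; 556; 570; 626; 645; 720];
  [:: 44; 75; 138; 162; 216; 250; 283; 359; 360; 361; 377; 380; 529; 593; 686; 754; 770; 786];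
  [:: 31; 95; 120; 167; 214; 237; 314; 321; 360; 364; 365; 374; 465; 563; 574; 621; 643; 733];
  [:: 60; 63; 126; 174; 224; 254; 281; 358; 363; 365; 368; 388; 533; 596; 677; 737; 761; 793];
  [:: 50; 97; 117; 155; 192; 248; 296; 347; 363; 364; 371; 376; 409; 438; 455; 511; 658; 799];
  [:: 42; 85; 115; 159; 190; 264; 300; 339; 367; 368; 372; 375; 404; 435; 459; 515; 662; 812];
  [:: 56; 71; 122; 166; 212; 258; 285; 361; 366; 368; 370; 382; 535; 597; 672; 748; 756; 785];
  [:: 25; 103; 136; 163; 218; 233; 310; 326; 358; 364; 366; 367; 464; 552; 576; 627; 650; 729];
  [:: 21; 91; 128; 183; 222; 243; 294; 327; 357; 370; 371; 373; 477; 546; 580; 620; 639; 718];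
  [:: 62; 77; 107; 153; 200; 256; 304; 355; 361; 367; 369; 371; 418; 425; 451; 516; 663; 805];
  [:: 40; 67; 142; 186; 204; 262; 279; 365; 369; 370; 376; 398; 537; 602; 689; 741; 772; 777];
  [:: 33; 79; 124; 175; 226; 235; 306; 330; 366; 373; 374; 375; 471; 565; 582; 610; 632; 726];
  [:: 46; 101; 113; 147; 196; 252; 308; 343; 357; 369; 372; 374; 407; 434; 442; 520; 667; 803];
  [:: 52; 65; 134; 170; 228; 266; 273; 360; 363; 372; 373; 386; 540; 604; 682; 738; 765; 796];
  [:: 36; 69; 130; 182; 220; 270; 275; 366; 372; 376; 377; 393; 545; 607; 679; 746; 764; 791];
  [:: 29; 83; 132; 171; 230; 241; 290; 334; 365; 371; 375; 377; 469; 560; 587; 612; 633; 716];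
  [:: 58; 93; 105; 149; 194; 260; 312; 353; 359; 362; 375; 376; 415; 421; 446; 522; 669; 808];
  [:: 37; 90; 130; 178; 223; 233; 286; 318; 379; 380; 386; 387; 418; 438; 474; 490; 688; 792];
  [:: 28; 74; 143; 167; 222; 253; 288; 337; 378; 380; 382; 397; 457; 541; 606; 612; 632; 693];
  [:: 44; 104; 113; 154; 190; 267; 293; 362; 378; 379; 392; 395; 559; 584; 659; 737; 772; 804];
  [:: 41; 86; 142; 162; 227; 237; 282; 324; 382; 383; 384; 393; 411; 434; 462; 500; 692; 797];
  [:: 56; 96; 105; 152; 192; 271; 301; 367; 379; 381; 383; 397; 547; 585; 666; 738; 775; 815];
  [:: 26; 76; 135; 175; 206; 265; 292; 341; 381; 382; 388; 391; 461; 543; 600; 620; 633; 696];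
  [:: 34; 64; 123; 183; 218; 261; 296; 342; 381; 385; 386; 393; 441; 526; 591; 626; 637; 699];
  [:: 45; 102; 138; 174; 203; 241; 276; 331; 384; 386; 390; 396; 404; 425; 472; 496; 673; 779];
  [:: 52; 84; 111; 160; 194; 247; 309; 374; 378; 384; 385; 387; 555; 568; 664; 741; 756; 811];
  [:: 32; 72; 119; 171; 210; 269; 300; 345; 378; 386; 388; 389; 453; 539; 589; 616; 639; 703];
  [:: 60; 80; 107; 158; 196; 263; 297; 364; 383; 387; 389; 391; 551; 581; 671; 746; 770; 817];
  [:: 49; 98; 146; 166; 219; 235; 274; 323; 387; 388; 394; 398; 399; 421; 467; 502; 685; 790];
  [:: 48; 100; 117; 150; 198; 255; 289; 357; 385; 391; 392; 396; 566; 573; 660; 748; 764; 809];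
  [:: 53; 82; 134; 186; 211; 231; 284; 316; 383; 388; 390; 392; 415; 435; 481; 494; 680; 783];
  [:: 24; 68; 139; 163; 230; 257; 304; 350; 380; 390; 391; 395; 449; 531; 605; 610; 643; 707];
  [:: 36; 92; 109; 156; 200; 251; 313; 375; 381; 384; 394; 395; 554; 571; 652; 752; 761; 800];
  [:: 30; 66; 131; 187; 214; 245; 308; 352; 389; 393; 395; 398; 445; 530; 599; 627; 645; 710];
  [:: 57; 94; 122; 170; 207; 243; 280; 335; 380; 392; 393; 394; 409; 430; 470; 483; 675; 781];
  [:: 22; 70; 127; 179; 226; 249; 312; 354; 385; 390; 397; 398; 450; 534; 595; 621; 650; 712];
  [:: 61; 78; 126; 182; 215; 239; 278; 328; 379; 382; 396; 398; 407; 427; 478; 486; 681; 787];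
  [:: 40; 88; 115; 148; 202; 259; 305; 371; 389; 394; 396; 397; 561; 578; 656; 754; 765; 801];
  [:: 24; 74; 128; 176; 219; 272; 290; 339; 360; 389; 400; 401; 405; 408; 462; 638; 653; 779];
  [:: 56; 79; 137; 160; 195; 249; 277; 399; 401; 412; 415; 439; 537; 571; 677; 702; 721; 804];
  [:: 46; 94; 117; 182; 209; 232; 299; 326; 399; 400; 403; 418; 461; 497; 504; 549; 591; 768];
  [:: 58; 78; 113; 186; 217; 234; 295; 321; 403; 404; 410; 411; 453; 484; 507; 556; 599; 757];
  [:: 60; 83; 121; 156; 193; 257; 283; 401; 402; 404; 418; 433; 527; 578; 682; 701; 731; 815];
  [:: 28; 76; 140; 172; 203; 264; 294; 347; 366; 385; 402; 403; 406; 416; 467; 646; 655; 781];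
  [:: 36; 87; 133; 150; 201; 265; 281; 399; 406; 407; 408; 423; 535; 584; 689; 713; 728; 811];
  [:: 54; 90; 107; 162; 225; 236; 311; 334; 404; 405; 407; 416; 445; 492; 510; 563; 605; 767];
  [:: 32; 64; 136; 188; 215; 252; 298; 353; 373; 397; 405; 406; 413; 419; 470; 642; 658; 783];
  [:: 62; 82; 105; 178; 213; 238; 307; 330; 399; 405; 409; 410; 441; 488; 514; 552; 595; 759];
  [:: 26; 72; 144; 184; 207; 248; 302; 343; 365; 395; 408; 410; 414; 417; 472; 649; 662; 787];
  [:: 52; 91; 125; 148; 199; 253; 285; 402; 408; 409; 411; 422; 529; 573; 679; 708; 732; 817];
  [:: 22; 68; 132; 168; 227; 268; 306; 336; 358; 381; 402; 410; 412; 413; 474; 640; 663; 790];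
  [:: 50; 102; 115; 170; 205; 240; 291; 319; 400; 411; 413; 415; 457; 501; 518; 546; 589; 774];
  [:: 44; 95; 145; 158; 191; 245; 279; 407; 411; 412; 419; 437; 545; 568; 672; 698; 724; 809];
  [:: 38; 86; 111; 166; 229; 242; 303; 327; 409; 415; 416; 417; 450; 489; 521; 565; 606; 763];
  [:: 34; 66; 120; 180; 211; 260; 310; 355; 377; 391; 400; 412; 414; 416; 478; 630; 667; 792];
  [:: 40; 99; 129; 154; 197; 269; 273; 404; 406; 414; 415; 431; 533; 585; 690; 706; 714; 800];
  [:: 48; 103; 141; 152; 189; 261; 275; 409; 414; 418; 419; 426; 540; 581; 686; 694; 719; 801];
  [:: 30; 70; 124; 164; 223; 256; 314; 349; 370; 378; 401; 403; 417; 419; 481; 635; 669; 797];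
  [:: 42; 98; 109; 174; 221; 244; 287; 317; 407; 413; 417; 418; 449; 499; 523; 560; 600; 773];
  [:: 61; 81; 122; 172; 198; 242; 299; 342; 421; 422; 423; 438; 471; 499; 518; 543; 580; 744];
  [:: 25; 95; 143; 149; 225; 257; 274; 331; 377; 389; 420; 422; 426; 429; 442; 619; 692; 805];
  [:: 52; 70; 108; 181; 204; 271; 298; 410; 420; 421; 432; 435; 559; 588; 652; 702; 714; 793];
  [:: 36; 68; 112; 185; 208; 263; 310; 405; 420; 424; 425; 438; 547; 593; 656; 701; 719; 796];
  [:: 53; 89; 126; 184; 190; 244; 295; 352; 423; 425; 431; 434; 469; 501; 504; 539; 569; 743];
  [:: 31; 79; 135; 153; 229; 253; 276; 335; 370; 385; 423; 424; 428; 437; 446; 615; 685; 813];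
  [:: 48; 76; 116; 161; 212; 251; 306; 417; 421; 427; 428; 429; 555; 596; 659; 713; 721; 777];
  [:: 29; 91; 123; 157; 205; 269; 278; 316; 360; 397; 426; 428; 433; 440; 448; 629; 675; 812];
  [:: 41; 97; 130; 180; 196; 232; 311; 350; 425; 426; 427; 437; 482; 484; 514; 530; 576; 755];
  [:: 37; 85; 134; 188; 192; 240; 307; 354; 421; 426; 430; 431; 477; 497; 507; 526; 570; 751];
  [:: 33; 83; 119; 151; 221; 265; 280; 328; 358; 395; 429; 431; 436; 439; 451; 624; 673; 816];
  [:: 40; 74; 110; 177; 216; 247; 314; 416; 424; 429; 430; 434; 551; 597; 660; 708; 724; 791];
  [:: 57; 77; 138; 176; 202; 236; 291; 345; 422; 433; 434; 435; 465; 489; 523; 541; 587; 739];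
  [:: 60; 66; 106; 169; 220; 267; 302; 403; 427; 432; 434; 440; 566; 602; 664; 698; 728; 785];
  [:: 27; 103; 139; 147; 213; 249; 282; 323; 373; 381; 424; 431; 432; 433; 455; 613; 688; 808];
  [:: 21; 87; 131; 159; 209; 261; 284; 318; 366; 391; 422; 432; 436; 437; 456; 622; 681; 799];
  [:: 49; 101; 142; 164; 194; 234; 303; 337; 430; 435; 437; 439; 475; 488; 510; 534; 574; 747];
  [:: 44; 72; 118; 165; 224; 259; 290; 413; 425; 428; 435; 436; 554; 604; 666; 706; 731; 782];
  [:: 23; 99; 127; 155; 217; 245; 286; 324; 365; 378; 420; 423; 439; 440; 459; 611; 680; 803];
  [:: 56; 64; 114; 173; 228; 255; 294; 400; 430; 436; 438; 440; 561; 607; 671; 694; 732; 786];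
  [:: 45; 93; 146; 168; 200; 238; 287; 341; 427; 433; 438; 439; 464; 492; 521; 531; 582; 735];
  [:: 62; 80; 123; 151; 197; 259; 283; 384; 408; 442; 443; 444; 459; 501; 541; 560; 643; 807];
  [:: 25; 101; 137; 168; 223; 231; 301; 335; 347; 373; 421; 441; 443; 447; 450; 598; 734; 742];
  [:: 51; 66; 112; 182; 206; 254; 311; 441; 442; 453; 456; 473; 517; 609; 660; 672; 694; 772];
  [:: 35; 70; 110; 186; 210; 266; 303; 441; 445; 446; 459; 468; 505; 614; 659; 677; 698; 775];
  [:: 54; 84; 131; 157; 189; 255; 285; 394; 406; 444; 446; 452; 455; 497; 543; 546; 632; 806];
  [:: 31; 93; 121; 176; 227; 233; 297; 328; 343; 377; 425; 444; 445; 449; 458; 594; 727; 750];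
  [:: 47; 74; 118; 162; 214; 262; 291; 442; 448; 449; 450; 480; 513; 617; 671; 679; 701; 756];
  [:: 29; 81; 133; 184; 203; 235; 313; 318; 355; 358; 427; 447; 449; 454; 461; 608; 717; 749];
  [:: 42; 88; 139; 155; 195; 271; 273; 392; 419; 446; 447; 448; 458; 488; 526; 556; 639; 818];
  [:: 38; 92; 127; 159; 191; 267; 281; 396; 414; 442; 447; 451; 452; 484; 539; 549; 633; 814];
  [:: 33; 77; 125; 172; 219; 237; 309; 316; 353; 370; 430; 450; 452; 457; 460; 603; 715; 753];
  [:: 39; 68; 116; 178; 218; 270; 287; 445; 450; 451; 455; 479; 509; 618; 666; 682; 702; 770];
  [:: 58; 96; 119; 153; 201; 251; 277; 387; 402; 443; 454; 455; 456; 499; 531; 565; 650; 802];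
  [:: 59; 64; 108; 170; 222; 258; 307; 448; 453; 455; 461; 466; 524; 623; 656; 686; 706; 764];
  [:: 27; 97; 145; 164; 211; 239; 293; 331; 339; 365; 434; 445; 452; 453; 454; 592; 730; 745];
  [:: 21; 89; 129; 188; 207; 241; 305; 324; 349; 360; 435; 443; 453; 457; 458; 601; 723; 736];
  [:: 50; 100; 143; 147; 193; 263; 275; 379; 412; 451; 456; 458; 460; 492; 530; 552; 637; 810];
  [:: 43; 76; 114; 166; 226; 246; 299; 446; 449; 456; 457; 476; 512; 625; 664; 689; 708; 761];
  [:: 23; 85; 141; 180; 215; 243; 289; 323; 336; 366; 438; 441; 444; 460; 461; 590; 722; 740];
  [:: 55; 72; 106; 174; 230; 250; 295; 451; 457; 459; 461; 463; 519; 628; 652; 690; 713; 765];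
  [:: 46; 104; 135; 149; 199; 247; 279; 383; 401; 448; 454; 459; 460; 489; 534; 563; 645; 798];
  [:: 24; 86; 116; 153; 221; 246; 312; 318; 347; 381; 399; 463; 464; 468; 471; 575; 695; 758];
  [:: 55; 95; 121; 187; 196; 236; 293; 460; 462; 464; 475; 478; 495; 634; 660; 679; 719; 741];
  [:: 45; 75; 136; 181; 207; 259; 273; 368; 440; 462; 463; 466; 481; 507; 539; 546; 612; 789];
  [:: 57; 71; 120; 185; 215; 255; 275; 363; 432; 466; 467; 473; 474; 514; 526; 549; 620; 778];
  [:: 59; 79; 125; 179; 194; 242; 301; 454; 464; 465; 467; 481; 485; 641; 659; 689; 724; 752];
  [:: 28; 98; 118; 151; 205; 250; 304; 324; 343; 389; 404; 465; 466; 469; 479; 583; 697; 760];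
  [:: 35; 91; 129; 167; 202; 240; 309; 444; 462; 469; 470; 471; 493; 647; 671; 686; 731; 748];
  [:: 53; 65; 132; 161; 223; 271; 277; 376; 424; 467; 468; 470; 479; 521; 534; 552; 626; 788];
  [:: 32; 94; 106; 159; 217; 254; 292; 331; 355; 395; 407; 468; 469; 476; 482; 579; 700; 762];
  [:: 61; 63; 124; 177; 211; 267; 279; 372; 420; 462; 468; 472; 473; 510; 530; 556; 616; 780];
  [:: 26; 102; 114; 157; 209; 258; 288; 323; 353; 385; 409; 471; 473; 477; 480; 586; 704; 766];
  [:: 51; 83; 133; 163; 200; 244; 297; 443; 465; 471; 472; 474; 487; 636; 666; 690; 721; 754];
  [:: 22; 90; 110; 149; 229; 262; 308; 316; 339; 378; 411; 465; 473; 475; 476; 577; 705; 769];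
  [:: 49; 73; 144; 169; 203; 251; 281; 361; 436; 463; 474; 476; 478; 504; 543; 560; 610; 795];
  [:: 43; 103; 137; 183; 192; 238; 289; 458; 470; 474; 475; 482; 503; 631; 656; 682; 714; 746];
  [:: 37; 69; 128; 165; 227; 263; 283; 369; 429; 472; 478; 479; 480; 523; 531; 563; 627; 784];
  [:: 34; 78; 108; 155; 213; 266; 300; 335; 349; 397; 415; 463; 475; 477; 479; 567; 709; 771];
  [:: 39; 87; 141; 175; 198; 232; 313; 452; 467; 469; 477; 478; 491; 648; 664; 672; 732; 737];
  [:: 47; 99; 145; 171; 190; 234; 305; 447; 472; 477; 481; 482; 498; 644; 652; 677; 728; 738];
  [:: 30; 82; 112; 147; 225; 270; 296; 328; 336; 391; 418; 464; 466; 480; 482; 572; 711; 776];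
  [:: 41; 67; 140; 173; 219; 247; 285; 359; 428; 470; 476; 480; 481; 518; 541; 565; 621; 794];
  [:: 27; 95; 124; 171; 206; 243; 310; 395; 484; 485; 491; 492; 525; 594; 681; 749; 769; 779];
  [:: 56; 65; 130; 186; 216; 246; 281; 342; 402; 428; 450; 483; 485; 487; 502; 523; 651; 798];
  [:: 62; 89; 115; 155; 194; 252; 288; 315; 466; 483; 484; 497; 500; 566; 581; 628; 647; 714];
  [:: 25; 79; 132; 183; 210; 239; 314; 397; 487; 488; 489; 498; 528; 603; 680; 736; 758; 781];
  [:: 54; 85; 117; 147; 200; 260; 292; 320; 473; 484; 486; 488; 502; 559; 568; 623; 648; 719];
  [:: 60; 69; 142; 178; 212; 250; 273; 352; 408; 436; 449; 486; 487; 493; 496; 518; 654; 802];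
  [:: 36; 73; 138; 166; 228; 254; 279; 350; 414; 432; 461; 486; 490; 491; 498; 507; 657; 806];
  [:: 33; 91; 140; 179; 214; 233; 290; 378; 489; 491; 495; 501; 532; 601; 692; 745; 766; 783];
  [:: 42; 101; 105; 153; 198; 268; 296; 322; 479; 483; 489; 490; 492; 551; 578; 614; 631; 721];
  [:: 52; 67; 146; 162; 224; 258; 275; 354; 406; 440; 457; 483; 491; 493; 494; 504; 661; 807];
  [:: 38; 97; 113; 149; 202; 256; 300; 325; 468; 488; 492; 494; 496; 547; 571; 609; 644; 724];
  [:: 31; 83; 128; 187; 218; 231; 306; 391; 492; 493; 499; 503; 536; 608; 688; 740; 760; 787];
  [:: 58; 81; 109; 159; 196; 248; 304; 329; 463; 490; 496; 497; 501; 561; 585; 625; 636; 728];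
  [:: 23; 103; 120; 175; 222; 241; 298; 385; 488; 493; 495; 497; 538; 598; 675; 753; 776; 790];
  [:: 44; 63; 134; 182; 208; 262; 285; 345; 401; 429; 445; 485; 495; 496; 500; 521; 665; 810];
  [:: 50; 93; 107; 151; 190; 272; 308; 332; 480; 486; 489; 499; 500; 555; 573; 618; 634; 731];
  [:: 40; 75; 122; 174; 220; 266; 277; 337; 419; 420; 453; 494; 498; 500; 503; 514; 668; 814];
  [:: 29; 87; 144; 163; 226; 237; 294; 381; 485; 497; 498; 499; 542; 590; 685; 742; 762; 792];
  [:: 48; 71; 126; 170; 204; 270; 283; 341; 412; 424; 441; 490; 495; 502; 503; 510; 670; 818];
  [:: 21; 99; 136; 167; 230; 235; 302; 389; 484; 487; 501; 503; 544; 592; 673; 750; 771; 797];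
  [:: 46; 77; 111; 157; 192; 264; 312; 333; 476; 494; 499; 501; 502; 554; 584; 617; 641; 732];
  [:: 52; 88; 117; 158; 190; 251; 301; 327; 401; 424; 475; 492; 505; 506; 509; 522; 691; 780];
  [:: 37; 98; 138; 186; 207; 237; 278; 340; 444; 504; 506; 518; 520; 535; 607; 617; 636; 706];
  [:: 32; 66; 127; 175; 230; 261; 288; 358; 504; 505; 512; 514; 548; 572; 655; 745; 758; 805];
  [:: 36; 100; 113; 160; 192; 259; 297; 317; 402; 429; 464; 489; 508; 509; 513; 516; 684; 788];
  [:: 34; 70; 139; 171; 222; 245; 292; 360; 507; 509; 510; 519; 550; 577; 662; 742; 760; 813];
  [:: 41; 102; 122; 178; 215; 235; 284; 346; 452; 504; 507; 508; 522; 533; 602; 625; 647; 694];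
  [:: 48; 96; 107; 148; 194; 267; 313; 326; 406; 436; 471; 501; 508; 511; 512; 519; 676; 794];
  [:: 22; 74; 135; 187; 210; 257; 296; 365; 510; 512; 517; 523; 553; 583; 667; 753; 762; 812];
  [:: 45; 78; 134; 166; 223; 243; 282; 351; 458; 506; 510; 511; 514; 545; 593; 623; 644; 702];
  [:: 49; 94; 126; 162; 211; 241; 286; 344; 447; 507; 514; 515; 516; 540; 588; 628; 648; 698];
  [:: 40; 104; 105; 156; 196; 255; 309; 319; 408; 428; 465; 499; 506; 512; 513; 515; 674; 784];
  [:: 30; 68; 143; 183; 206; 249; 300; 366; 513; 514; 521; 524; 557; 575; 658; 750; 766; 816];
  [:: 26; 64; 131; 167; 226; 269; 304; 370; 507; 513; 517; 518; 558; 567; 653; 740; 769; 808];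
  [:: 53; 86; 146; 182; 203; 233; 280; 338; 443; 511; 516; 518; 523; 529; 604; 618; 641; 713];
  [:: 60; 92; 115; 152; 198; 247; 293; 334; 412; 420; 482; 488; 505; 516; 517; 520; 687; 778];
  [:: 57; 82; 130; 174; 227; 239; 274; 356; 460; 508; 510; 520; 521; 537; 597; 609; 631; 701];
  [:: 24; 76; 119; 179; 218; 253; 308; 373; 505; 518; 519; 521; 562; 586; 669; 749; 771; 799];
  [:: 44; 80; 111; 150; 200; 271; 305; 321; 414; 440; 469; 497; 515; 519; 520; 524; 683; 795];
  [:: 28; 72; 123; 163; 214; 265; 312; 377; 504; 509; 523; 524; 564; 579; 663; 736; 776; 803];
  [:: 56; 84; 109; 154; 202; 263; 289; 330; 419; 432; 477; 484; 511; 517; 522; 524; 678; 789];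
  [:: 61; 90; 142; 170; 219; 231; 276; 348; 454; 515; 521; 522; 523; 527; 596; 614; 634; 708];
  [:: 27; 82; 137; 152; 204; 266; 286; 353; 483; 526; 527; 533; 534; 615; 723; 758; 790; 812];
  [:: 55; 88; 107; 185; 218; 240; 290; 384; 429; 449; 465; 525; 527; 529; 544; 565; 693; 735];
  [:: 61; 73; 131; 180; 193; 248; 292; 357; 403; 524; 525; 526; 539; 542; 584; 607; 644; 672];
  [:: 25; 90; 121; 158; 208; 270; 282; 355; 486; 529; 530; 531; 540; 624; 722; 760; 779; 799];
  [:: 53; 75; 127; 164; 199; 252; 300; 362; 410; 517; 526; 528; 530; 544; 585; 602; 631; 677];
  [:: 59; 100; 111; 177; 214; 232; 294; 394; 428; 457; 471; 528; 529; 535; 538; 560; 696; 739];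
  [:: 35; 96; 115; 165; 230; 238; 298; 392; 440; 453; 477; 528; 532; 533; 540; 549; 699; 743];
  [:: 33; 98; 133; 156; 212; 246; 276; 336; 490; 531; 533; 537; 543; 622; 734; 762; 787; 808];
  [:: 41; 63; 143; 176; 197; 256; 308; 364; 416; 509; 525; 531; 532; 534; 568; 593; 641; 679];
  [:: 51; 104; 109; 161; 226; 234; 302; 396; 436; 461; 469; 525; 533; 535; 536; 546; 703; 744];
  [:: 37; 71; 139; 168; 201; 260; 296; 367; 405; 505; 530; 534; 536; 538; 581; 588; 634; 682];
  [:: 31; 86; 125; 160; 216; 262; 274; 349; 494; 534; 535; 541; 545; 629; 730; 766; 781; 803];
  [:: 57; 67; 123; 188; 195; 264; 288; 371; 400; 519; 532; 538; 539; 543; 573; 604; 648; 686];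
  [:: 23; 78; 145; 154; 220; 254; 284; 343; 496; 530; 535; 537; 539; 619; 717; 769; 797; 816];
  [:: 43; 92; 105; 181; 210; 244; 306; 387; 424; 450; 464; 527; 537; 538; 542; 563; 707; 747];
  [:: 49; 65; 135; 172; 189; 268; 312; 374; 417; 513; 528; 531; 541; 542; 571; 597; 636; 689];
  [:: 39; 80; 117; 173; 222; 236; 310; 379; 432; 441; 482; 536; 540; 542; 545; 556; 710; 751];
  [:: 29; 102; 129; 148; 224; 250; 280; 339; 500; 527; 539; 540; 541; 611; 727; 771; 783; 805];
  [:: 47; 84; 113; 169; 206; 242; 314; 383; 420; 445; 475; 532; 537; 544; 545; 552; 712; 755];
  [:: 21; 94; 141; 150; 228; 258; 278; 347; 502; 526; 529; 543; 545; 613; 715; 776; 792; 813];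
  [:: 45; 69; 119; 184; 191; 272; 304; 375; 413; 512; 536; 541; 543; 544; 578; 596; 647; 690];
  [:: 51; 75; 130; 183; 189; 257; 291; 369; 412; 445; 464; 534; 547; 548; 551; 564; 733; 759];
  [:: 38; 96; 140; 185; 209; 235; 280; 382; 423; 493; 546; 548; 560; 562; 573; 596; 628; 664];
  [:: 32; 85; 108; 154; 228; 248; 305; 316; 506; 546; 547; 554; 556; 635; 697; 742; 779; 808];
  [:: 35; 71; 142; 187; 191; 253; 299; 359; 401; 450; 465; 531; 550; 551; 555; 558; 726; 767];
  [:: 34; 97; 112; 152; 220; 252; 289; 318; 508; 549; 551; 552; 561; 640; 704; 750; 781; 805];
  [:: 42; 80; 144; 177; 217; 241; 278; 388; 431; 491; 546; 549; 550; 564; 584; 604; 623; 652];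
  [:: 47; 65; 138; 163; 193; 269; 307; 368; 408; 457; 469; 543; 550; 553; 554; 561; 718; 773];
  [:: 22; 93; 116; 160; 208; 256; 301; 323; 511; 552; 554; 559; 565; 646; 709; 749; 783; 816];
  [:: 46; 92; 120; 165; 225; 239; 286; 393; 437; 503; 548; 552; 553; 556; 581; 602; 614; 660];
  [:: 50; 84; 136; 161; 213; 243; 284; 386; 426; 498; 549; 556; 557; 558; 585; 607; 609; 656];
  [:: 39; 63; 146; 179; 195; 265; 295; 361; 402; 449; 471; 541; 548; 554; 555; 557; 716; 763];
  [:: 30; 101; 110; 158; 204; 260; 293; 324; 515; 555; 556; 563; 566; 638; 700; 753; 787; 813];
  [:: 26; 89; 106; 150; 224; 264; 313; 328; 516; 549; 555; 559; 560; 630; 695; 745; 790; 803];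
  [:: 54; 104; 128; 181; 205; 237; 276; 380; 422; 487; 553; 558; 560; 565; 578; 597; 625; 671];
  [:: 59; 73; 134; 171; 197; 249; 287; 376; 419; 441; 475; 530; 547; 558; 559; 562; 729; 757];
  [:: 58; 88; 124; 173; 229; 231; 282; 398; 439; 495; 550; 552; 562; 563; 568; 588; 618; 659];
  [:: 24; 77; 118; 156; 216; 268; 297; 331; 520; 547; 560; 561; 563; 649; 711; 736; 792; 812];
  [:: 43; 69; 122; 167; 199; 261; 311; 363; 406; 461; 477; 539; 557; 561; 562; 566; 725; 774];
  [:: 28; 81; 114; 148; 212; 272; 309; 335; 522; 546; 551; 565; 566; 642; 705; 740; 797; 799];
  [:: 55; 67; 126; 175; 201; 245; 303; 372; 414; 453; 482; 526; 553; 559; 564; 566; 720; 768];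
  [:: 62; 100; 132; 169; 221; 233; 274; 390; 433; 485; 557; 563; 564; 565; 571; 593; 617; 666];
  [:: 46; 80; 131; 155; 201; 267; 275; 478; 516; 568; 569; 573; 576; 624; 655; 692; 700; 776];
  [:: 29; 85; 145; 176; 207; 231; 309; 386; 413; 487; 533; 561; 567; 569; 580; 583; 631; 815];
  [:: 59; 70; 116; 166; 206; 262; 295; 330; 337; 359; 424; 567; 568; 571; 586; 605; 733; 735];
  [:: 51; 68; 118; 174; 210; 246; 307; 334; 341; 361; 429; 571; 572; 578; 579; 606; 726; 739];
  [:: 21; 97; 137; 172; 215; 233; 313; 393; 400; 493; 540; 566; 569; 570; 572; 586; 634; 817];
  [:: 58; 84; 127; 147; 197; 271; 279; 481; 506; 570; 571; 574; 584; 629; 662; 685; 709; 769];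
  [:: 27; 93; 125; 188; 223; 235; 289; 390; 410; 498; 537; 547; 567; 574; 575; 576; 636; 800];
  [:: 39; 76; 106; 182; 214; 258; 303; 317; 342; 363; 436; 572; 573; 575; 584; 589; 718; 743];
  [:: 54; 88; 143; 153; 191; 247; 283; 462; 515; 573; 574; 581; 587; 611; 667; 675; 705; 760];
  [:: 35; 74; 114; 170; 218; 250; 311; 327; 345; 368; 428; 567; 573; 577; 578; 600; 716; 744];
  [:: 62; 92; 139; 149; 189; 263; 277; 474; 508; 576; 578; 582; 585; 622; 658; 673; 711; 758];
  [:: 23; 101; 121; 184; 211; 237; 305; 398; 403; 491; 545; 559; 570; 576; 577; 579; 641; 811];
  [:: 50; 96; 123; 159; 199; 255; 273; 470; 522; 570; 578; 580; 581; 615; 653; 688; 704; 771];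
  [:: 55; 66; 110; 162; 222; 270; 299; 321; 350; 369; 420; 568; 579; 581; 583; 595; 729; 747];
  [:: 33; 89; 141; 168; 203; 239; 297; 388; 417; 485; 535; 554; 575; 579; 580; 587; 644; 804];
  [:: 47; 72; 108; 186; 226; 254; 287; 319; 352; 372; 440; 577; 583; 584; 585; 591; 725; 751];
  [:: 38; 100; 135; 151; 195; 251; 285; 467; 511; 568; 580; 582; 584; 613; 669; 681; 695; 766];
  [:: 25; 77; 133; 180; 227; 241; 293; 380; 405; 503; 527; 551; 572; 574; 582; 583; 647; 801];
  [:: 31; 81; 129; 164; 219; 243; 301; 382; 416; 495; 529; 555; 577; 582; 586; 587; 648; 809];
  [:: 42; 104; 119; 157; 193; 259; 281; 472; 520; 569; 571; 585; 587; 619; 663; 680; 697; 762];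
  [:: 43; 64; 112; 178; 230; 266; 291; 326; 354; 376; 432; 575; 581; 585; 586; 599; 720; 755];
  [:: 28; 94; 108; 157; 229; 246; 296; 357; 422; 513; 535; 561; 589; 590; 600; 603; 609; 791];
  [:: 39; 103; 121; 171; 200; 240; 301; 330; 350; 387; 412; 574; 588; 590; 593; 608; 712; 767];
  [:: 53; 67; 144; 165; 215; 267; 273; 459; 500; 588; 589; 596; 599; 638; 669; 673; 723; 745];
  [:: 47; 95; 125; 183; 202; 232; 297; 334; 337; 384; 401; 582; 592; 593; 597; 601; 707; 763];
  [:: 37; 73; 136; 173; 211; 271; 275; 455; 502; 591; 593; 595; 604; 646; 663; 675; 722; 742];
  [:: 26; 78; 112; 159; 221; 250; 308; 362; 423; 512; 533; 566; 589; 591; 592; 608; 614; 777];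
  [:: 49; 71; 124; 181; 227; 247; 277; 446; 483; 595; 596; 602; 606; 642; 655; 680; 734; 753];
  [:: 55; 83; 129; 179; 190; 238; 313; 317; 345; 396; 408; 580; 592; 594; 596; 604; 696; 774];
  [:: 34; 90; 116; 147; 209; 254; 304; 364; 426; 524; 545; 547; 590; 594; 595; 599; 617; 786];
  [:: 32; 82; 110; 155; 205; 258; 312; 367; 431; 519; 540; 559; 591; 598; 599; 601; 618; 782];
  [:: 41; 75; 120; 169; 223; 263; 279; 442; 496; 597; 599; 605; 607; 649; 653; 681; 730; 750];
  [:: 43; 79; 133; 187; 198; 234; 309; 327; 341; 394; 402; 587; 590; 596; 597; 598; 693; 773];
  [:: 35; 99; 137; 175; 194; 244; 293; 321; 354; 383; 419; 576; 588; 601; 602; 603; 710; 759];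
  [:: 61; 69; 140; 161; 207; 255; 281; 456; 490; 591; 597; 600; 602; 640; 667; 685; 717; 740];
  [:: 24; 102; 106; 151; 225; 262; 300; 371; 433; 509; 529; 554; 594; 600; 601; 606; 623; 796];
  [:: 45; 63; 132; 185; 219; 251; 283; 451; 486; 588; 600; 604; 605; 630; 662; 688; 727; 749];
  [:: 30; 86; 118; 149; 217; 266; 288; 374; 437; 517; 537; 551; 592; 595; 603; 605; 625; 785];
  [:: 59; 91; 141; 163; 192; 236; 305; 319; 342; 392; 406; 569; 598; 603; 604; 607; 703; 768];
  [:: 51; 87; 145; 167; 196; 242; 289; 326; 352; 379; 414; 570; 594; 602; 607; 608; 699; 757];
  [:: 22; 98; 114; 153; 213; 270; 292; 375; 439; 505; 527; 555; 598; 605; 606; 608; 628; 793];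
  [:: 57; 65; 128; 177; 203; 259; 285; 448; 494; 589; 593; 606; 607; 635; 658; 692; 715; 736];
  [:: 28; 66; 136; 184; 227; 256; 290; 315; 443; 493; 519; 555; 588; 610; 611; 621; 624; 770];
  [:: 40; 79; 145; 152; 199; 257; 281; 345; 372; 392; 475; 609; 611; 614; 629; 637; 670; 788];
  [:: 54; 102; 109; 166; 217; 232; 307; 438; 542; 575; 609; 610; 617; 620; 681; 711; 715; 808];
  [:: 48; 83; 137; 158; 201; 253; 273; 342; 376; 379; 464; 613; 614; 618; 622; 645; 665; 784];
  [:: 38; 94; 115; 174; 213; 234; 311; 434; 544; 583; 612; 614; 616; 625; 680; 705; 717; 805];
  [:: 26; 70; 120; 188; 219; 268; 294; 320; 444; 491; 524; 554; 593; 610; 612; 613; 629; 756];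
  [:: 50; 82; 113; 182; 229; 236; 287; 425; 525; 579; 616; 617; 623; 627; 692; 697; 722; 816];
  [:: 56; 87; 125; 156; 189; 269; 279; 354; 359; 387; 471; 613; 615; 617; 625; 643; 654; 795];
  [:: 34; 74; 132; 164; 207; 264; 298; 322; 447; 503; 505; 566; 596; 611; 615; 616; 620; 765];
  [:: 32; 68; 124; 180; 203; 272; 302; 325; 452; 498; 517; 561; 597; 612; 619; 620; 622; 761];
  [:: 42; 78; 117; 170; 225; 238; 303; 421; 538; 586; 618; 620; 626; 628; 688; 695; 723; 813];
  [:: 44; 91; 121; 160; 197; 265; 275; 352; 369; 383; 465; 611; 617; 618; 619; 650; 651; 794];
  [:: 36; 95; 141; 154; 193; 249; 285; 341; 363; 396; 482; 609; 622; 623; 624; 639; 668; 780];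
  [:: 62; 98; 111; 162; 209; 240; 295; 435; 532; 577; 612; 618; 621; 623; 675; 709; 727; 803];
  [:: 24; 64; 144; 172; 223; 260; 306; 329; 454; 487; 512; 551; 602; 615; 621; 622; 627; 775];
  [:: 46; 90; 105; 186; 221; 242; 291; 430; 528; 567; 609; 621; 625; 626; 685; 704; 730; 812];
  [:: 30; 76; 128; 168; 215; 248; 310; 332; 458; 495; 509; 559; 604; 613; 616; 624; 626; 764];
  [:: 60; 99; 133; 148; 191; 261; 277; 350; 361; 384; 469; 619; 624; 625; 628; 632; 661; 789];
  [:: 52; 103; 129; 150; 195; 245; 283; 337; 368; 394; 477; 615; 623; 628; 629; 633; 657; 778];
  [:: 22; 72; 140; 176; 211; 252; 314; 333; 460; 485; 513; 547; 607; 619; 626; 627; 629; 772];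
  [:: 58; 86; 107; 178; 205; 244; 299; 427; 536; 572; 610; 614; 627; 628; 673; 700; 734; 799];
  [:: 45; 89; 122; 180; 202; 234; 307; 415; 558; 603; 631; 632; 636; 639; 658; 697; 734; 797];
  [:: 29; 103; 127; 153; 209; 265; 274; 344; 476; 491; 519; 529; 568; 630; 632; 643; 646; 752];
  [:: 60; 74; 112; 165; 204; 255; 306; 317; 372; 379; 445; 626; 630; 631; 634; 649; 691; 798];
  [:: 52; 76; 110; 173; 208; 267; 290; 319; 376; 383; 450; 627; 634; 635; 641; 642; 684; 802];
  [:: 21; 95; 139; 151; 217; 269; 276; 351; 463; 498; 524; 535; 571; 632; 633; 635; 649; 754];
  [:: 57; 85; 126; 164; 198; 238; 311; 418; 548; 608; 633; 634; 637; 647; 667; 704; 727; 790];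
  [:: 27; 83; 135; 159; 225; 245; 278; 348; 473; 495; 505; 540; 573; 630; 637; 638; 639; 737];
  [:: 40; 64; 118; 181; 212; 263; 302; 321; 359; 384; 457; 610; 635; 636; 638; 647; 676; 806];
  [:: 53; 101; 130; 176; 192; 242; 287; 399; 557; 590; 636; 637; 644; 650; 663; 709; 717; 781];
  [:: 36; 72; 116; 169; 216; 271; 294; 326; 369; 387; 449; 621; 630; 636; 640; 641; 674; 807];
  [:: 61; 97; 134; 168; 190; 236; 303; 411; 550; 601; 639; 641; 645; 648; 669; 700; 715; 779];
  [:: 23; 79; 143; 157; 213; 261; 280; 356; 466; 503; 517; 533; 578; 633; 639; 640; 642; 748];
  [:: 49; 81; 138; 188; 200; 232; 295; 407; 564; 594; 633; 641; 643; 644; 662; 695; 730; 792];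
  [:: 56; 68; 108; 161; 220; 259; 314; 327; 363; 392; 441; 616; 631; 642; 644; 646; 687; 810];
  [:: 33; 99; 131; 149; 205; 253; 282; 346; 480; 493; 512; 527; 581; 638; 642; 643; 650; 741];
  [:: 48; 66; 114; 185; 224; 247; 298; 330; 361; 394; 461; 612; 640; 646; 647; 648; 683; 814];
  [:: 37; 93; 142; 172; 196; 244; 291; 404; 553; 592; 631; 643; 645; 647; 653; 711; 723; 787];
  [:: 25; 91; 119; 155; 229; 249; 284; 338; 468; 485; 509; 545; 584; 635; 637; 645; 646; 738];
  [:: 31; 87; 123; 147; 221; 257; 286; 340; 479; 487; 513; 537; 585; 640; 645; 649; 650; 746];
  [:: 41; 77; 146; 184; 194; 240; 299; 409; 562; 598; 632; 634; 648; 650; 655; 705; 722; 783];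
  [:: 44; 70; 106; 177; 228; 251; 310; 334; 368; 396; 453; 620; 638; 644; 648; 649; 678; 818];
  [:: 45; 65; 139; 188; 197; 248; 300; 337; 484; 620; 652; 653; 656; 669; 720; 774; 780; 806];
  [:: 31; 90; 145; 156; 204; 250; 278; 393; 422; 460; 480; 551; 651; 653; 665; 667; 694; 748];
  [:: 39; 96; 111; 169; 226; 244; 290; 358; 399; 516; 579; 598; 646; 651; 652; 659; 661; 680];
  [:: 57; 69; 143; 180; 189; 252; 296; 341; 488; 616; 655; 656; 660; 663; 729; 768; 788; 814];
  [:: 47; 80; 109; 181; 230; 240; 294; 360; 404; 506; 567; 594; 649; 654; 656; 657; 666; 688];
  [:: 33; 86; 137; 148; 208; 258; 284; 398; 423; 454; 476; 555; 651; 654; 655; 669; 698; 737];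
  [:: 53; 73; 119; 168; 195; 256; 312; 342; 489; 627; 655; 658; 659; 666; 726; 759; 794; 810];
  [:: 55; 92; 117; 177; 206; 234; 298; 365; 407; 515; 577; 608; 630; 657; 659; 664; 670; 685];
  [:: 21; 102; 125; 154; 212; 266; 282; 380; 426; 444; 466; 561; 653; 657; 658; 661; 701; 746];
  [:: 29; 98; 121; 150; 216; 254; 286; 390; 431; 443; 463; 554; 654; 661; 662; 663; 702; 738];
  [:: 61; 67; 135; 164; 191; 260; 308; 345; 492; 626; 653; 659; 660; 662; 733; 757; 784; 818];
  [:: 43; 84; 115; 185; 222; 232; 302; 366; 409; 508; 572; 603; 642; 660; 661; 668; 671; 692];
  [:: 35; 104; 107; 173; 214; 242; 306; 370; 411; 522; 586; 592; 638; 654; 660; 664; 665; 681];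
  [:: 25; 82; 141; 160; 220; 246; 280; 386; 433; 458; 479; 547; 658; 663; 665; 670; 706; 754];
  [:: 49; 63; 127; 184; 201; 264; 292; 350; 497; 612; 652; 663; 664; 667; 725; 773; 778; 807];
  [:: 23; 94; 133; 152; 224; 270; 274; 382; 437; 452; 473; 566; 655; 657; 667; 668; 708; 741];
  [:: 59; 88; 113; 161; 210; 238; 310; 373; 415; 511; 575; 601; 635; 652; 665; 666; 668; 673];
  [:: 37; 75; 123; 176; 193; 268; 304; 352; 499; 621; 662; 666; 667; 671; 716; 767; 795; 798];
  [:: 51; 100; 105; 165; 218; 236; 314; 377; 418; 520; 583; 590; 640; 651; 656; 670; 671; 675];
  [:: 41; 71; 131; 172; 199; 272; 288; 354; 501; 610; 658; 664; 669; 671; 718; 763; 789; 802];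
  [:: 27; 78; 129; 158; 228; 262; 276; 388; 439; 447; 468; 559; 662; 668; 669; 670; 713; 752];
  [:: 24; 93; 112; 158; 212; 248; 313; 367; 413; 443; 479; 527; 673; 674; 684; 688; 714; 765];
  [:: 59; 67; 138; 167; 189; 265; 299; 385; 430; 502; 577; 590; 629; 667; 672; 674; 679; 683];
  [:: 38; 104; 124; 169; 217; 239; 284; 334; 514; 639; 672; 673; 677; 692; 710; 743; 789; 810];
  [:: 51; 73; 122; 175; 191; 269; 295; 395; 427; 496; 575; 592; 622; 669; 676; 677; 678; 689];
  [:: 42; 96; 132; 181; 213; 231; 286; 327; 510; 637; 675; 677; 682; 685; 712; 751; 778; 798];
  [:: 28; 77; 110; 160; 224; 252; 305; 364; 400; 444; 480; 529; 674; 675; 676; 692; 719; 764];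
  [:: 46; 84; 140; 177; 229; 237; 274; 319; 523; 650; 675; 679; 680; 689; 693; 747; 788; 807];
  [:: 32; 89; 118; 148; 220; 256; 293; 375; 410; 447; 463; 533; 673; 678; 680; 683; 721; 775];
  [:: 39; 71; 134; 183; 193; 245; 311; 391; 438; 486; 586; 594; 613; 653; 678; 679; 686; 691];
  [:: 35; 75; 126; 171; 195; 261; 307; 397; 435; 483; 583; 598; 611; 663; 682; 683; 687; 690];
  [:: 26; 81; 116; 156; 228; 260; 289; 374; 403; 452; 476; 535; 676; 681; 683; 685; 724; 772];
  [:: 50; 80; 128; 185; 225; 233; 282; 317; 521; 645; 673; 679; 681; 682; 707; 755; 780; 802];
  [:: 54; 100; 120; 173; 209; 243; 278; 330; 507; 633; 672; 685; 686; 688; 699; 744; 795; 818];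
  [:: 55; 69; 146; 163; 197; 253; 291; 389; 425; 500; 572; 601; 624; 658; 676; 682; 684; 686];
  [:: 22; 101; 108; 152; 216; 264; 309; 362; 417; 454; 468; 537; 680; 684; 685; 691; 728; 761];
  [:: 58; 92; 144; 161; 221; 235; 276; 326; 518; 643; 681; 688; 689; 690; 696; 735; 784; 806];
  [:: 47; 63; 130; 187; 199; 249; 303; 378; 434; 494; 579; 603; 619; 655; 672; 684; 687; 689];
  [:: 34; 85; 114; 150; 204; 268; 301; 371; 405; 458; 466; 540; 675; 678; 687; 688; 731; 770];
  [:: 30; 97; 106; 154; 208; 272; 297; 357; 416; 460; 473; 545; 681; 687; 691; 692; 732; 756];
  [:: 62; 88; 136; 165; 205; 241; 280; 321; 504; 632; 680; 686; 690; 692; 703; 739; 794; 814];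
  [:: 43; 65; 142; 179; 201; 257; 287; 381; 421; 490; 567; 608; 615; 662; 674; 677; 690; 691];
  [:: 46; 97; 107; 159; 198; 260; 288; 379; 526; 599; 678; 694; 695; 698; 711; 743; 759; 795];
  [:: 31; 103; 132; 179; 206; 235; 294; 351; 417; 439; 443; 509; 652; 693; 695; 707; 709; 811];
  [:: 40; 69; 138; 170; 224; 246; 285; 316; 462; 558; 583; 619; 642; 693; 694; 701; 703; 722];
  [:: 58; 101; 111; 155; 190; 256; 292; 383; 530; 595; 687; 697; 698; 702; 705; 751; 767; 789];
  [:: 48; 67; 122; 182; 228; 250; 281; 318; 467; 548; 586; 615; 630; 696; 698; 699; 708; 730];
  [:: 33; 95; 128; 163; 210; 241; 302; 356; 413; 433; 444; 513; 656; 693; 696; 697; 711; 800];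
  [:: 54; 77; 115; 149; 196; 272; 296; 384; 531; 606; 684; 697; 700; 701; 708; 747; 773; 780];
  [:: 56; 75; 134; 178; 204; 254; 275; 323; 470; 557; 567; 629; 640; 699; 701; 706; 712; 727];
  [:: 21; 83; 144; 175; 214; 239; 310; 338; 403; 423; 447; 519; 659; 695; 699; 700; 703; 809];
  [:: 29; 79; 140; 167; 218; 243; 298; 348; 400; 422; 452; 512; 660; 696; 703; 704; 705; 801];
  [:: 62; 93; 109; 147; 192; 268; 300; 387; 534; 605; 691; 695; 701; 702; 704; 755; 763; 778];
  [:: 44; 73; 126; 186; 220; 258; 273; 324; 472; 550; 579; 624; 635; 702; 703; 710; 713; 734];
  [:: 36; 65; 146; 174; 212; 262; 283; 328; 474; 564; 575; 613; 649; 696; 702; 706; 707; 723];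
  [:: 25; 99; 124; 187; 222; 237; 290; 344; 416; 437; 454; 505; 664; 700; 705; 707; 712; 817];
  [:: 50; 85; 105; 157; 202; 252; 304; 392; 539; 591; 683; 694; 705; 706; 709; 744; 757; 794];
  [:: 23; 91; 136; 171; 226; 231; 314; 340; 410; 431; 458; 524; 666; 697; 699; 709; 710; 804];
  [:: 60; 71; 130; 162; 208; 266; 279; 331; 478; 553; 572; 622; 638; 694; 707; 708; 710; 715];
  [:: 38; 81; 117; 153; 194; 264; 308; 394; 541; 600; 674; 704; 708; 709; 713; 735; 774; 788];
  [:: 52; 63; 142; 166; 216; 270; 277; 335; 481; 562; 577; 611; 646; 693; 698; 712; 713; 717];
  [:: 42; 89; 113; 151; 200; 248; 312; 396; 543; 589; 676; 700; 706; 711; 713; 739; 768; 784];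
  [:: 27; 87; 120; 183; 230; 233; 306; 346; 405; 426; 460; 517; 671; 704; 710; 711; 712; 815];
  [:: 24; 70; 135; 183; 214; 269; 288; 325; 416; 422; 476; 485; 672; 715; 716; 726; 730; 786];
  [:: 60; 96; 109; 150; 190; 259; 309; 343; 451; 544; 608; 611; 640; 709; 714; 716; 721; 725];
  [:: 37; 82; 146; 170; 215; 241; 282; 376; 556; 576; 668; 714; 715; 719; 734; 747; 768; 806];
  [:: 52; 80; 115; 154; 192; 255; 313; 353; 448; 538; 601; 613; 638; 711; 718; 719; 720; 731];
  [:: 41; 90; 138; 182; 211; 243; 274; 369; 552; 574; 670; 717; 719; 724; 727; 735; 757; 814];
  [:: 28; 68; 119; 187; 226; 261; 292; 322; 417; 423; 463; 487; 677; 716; 717; 718; 734; 785];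
  [:: 45; 98; 126; 178; 227; 231; 280; 361; 565; 587; 651; 717; 721; 722; 731; 744; 767; 810];
  [:: 32; 76; 131; 163; 222; 249; 296; 333; 400; 426; 473; 491; 679; 715; 720; 722; 725; 796];
  [:: 40; 92; 113; 158; 194; 271; 289; 349; 459; 528; 592; 615; 649; 695; 720; 721; 728; 733];
  [:: 36; 84; 117; 152; 196; 267; 305; 355; 456; 525; 590; 619; 646; 705; 724; 725; 729; 732];
  [:: 26; 74; 123; 179; 230; 245; 300; 332; 413; 431; 466; 493; 682; 718; 723; 725; 727; 793];
  [:: 49; 86; 122; 186; 223; 239; 276; 359; 563; 582; 665; 715; 721; 723; 724; 739; 759; 818];
  [:: 53; 78; 142; 174; 207; 235; 286; 372; 549; 570; 657; 714; 727; 728; 730; 755; 774; 807];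
  [:: 56; 104; 111; 148; 198; 251; 297; 347; 446; 542; 603; 622; 635; 700; 718; 724; 726; 728];
  [:: 22; 66; 143; 171; 218; 265; 304; 320; 405; 433; 480; 495; 686; 722; 726; 727; 733; 782];
  [:: 57; 102; 134; 162; 219; 233; 278; 368; 560; 580; 654; 723; 730; 731; 732; 743; 763; 798];
  [:: 48; 88; 105; 160; 200; 263; 293; 336; 455; 536; 598; 624; 642; 697; 714; 726; 729; 731];
  [:: 34; 72; 127; 167; 206; 257; 308; 329; 403; 437; 468; 498; 689; 717; 720; 729; 730; 791];
  [:: 30; 64; 139; 175; 210; 253; 312; 315; 410; 439; 479; 503; 690; 723; 729; 733; 734; 777];
  [:: 61; 94; 130; 166; 203; 237; 284; 363; 546; 569; 661; 722; 728; 732; 734; 751; 773; 802];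
  [:: 44; 100; 107; 156; 202; 247; 301; 339; 442; 532; 594; 629; 630; 704; 716; 719; 732; 733];
  [:: 32; 70; 144; 168; 211; 264; 290; 440; 526; 569; 687; 710; 718; 736; 737; 738; 753; 798];
  [:: 48; 79; 129; 156; 191; 265; 285; 323; 456; 486; 522; 562; 608; 735; 737; 741; 744; 769];
  [:: 62; 86; 113; 174; 225; 232; 291; 351; 364; 380; 479; 636; 656; 735; 736; 747; 750; 791];
  [:: 54; 98; 105; 170; 229; 234; 299; 356; 374; 382; 480; 647; 660; 735; 739; 740; 753; 777];
  [:: 34; 68; 136; 176; 223; 248; 294; 432; 530; 570; 691; 712; 725; 738; 740; 746; 749; 802];
  [:: 44; 83; 141; 148; 195; 269; 281; 331; 459; 494; 516; 564; 601; 738; 739; 743; 752; 758];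
  [:: 42; 94; 111; 186; 205; 236; 307; 338; 371; 386; 463; 644; 666; 736; 742; 743; 744; 786];
  [:: 60; 87; 137; 154; 199; 245; 275; 328; 442; 500; 508; 548; 592; 741; 743; 748; 755; 766];
  [:: 22; 76; 124; 184; 219; 260; 298; 424; 531; 574; 674; 693; 729; 740; 741; 742; 752; 806];
  [:: 30; 74; 120; 172; 227; 252; 302; 420; 534; 576; 684; 707; 720; 736; 741; 745; 746; 807];
  [:: 56; 91; 145; 150; 193; 261; 273; 335; 455; 490; 506; 558; 590; 744; 746; 751; 754; 760];
  [:: 38; 102; 107; 182; 221; 238; 295; 348; 375; 388; 476; 648; 659; 739; 744; 745; 749; 782];
  [:: 26; 66; 140; 164; 215; 272; 306; 436; 539; 580; 678; 699; 716; 737; 748; 749; 750; 810];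
  [:: 58; 90; 117; 166; 213; 240; 287; 344; 367; 390; 468; 641; 652; 742; 747; 749; 755; 796];
  [:: 40; 95; 133; 160; 189; 253; 283; 324; 448; 483; 520; 553; 603; 739; 746; 747; 748; 776];
  [:: 52; 99; 121; 152; 201; 249; 279; 316; 446; 502; 515; 550; 598; 737; 747; 751; 752; 762];
  [:: 24; 72; 132; 188; 203; 256; 310; 429; 541; 582; 676; 696; 733; 745; 750; 752; 754; 814];
  [:: 50; 78; 109; 178; 209; 242; 311; 340; 357; 393; 466; 631; 671; 740; 743; 750; 751; 785];
  [:: 36; 103; 125; 158; 197; 257; 277; 318; 451; 496; 511; 557; 594; 735; 738; 754; 755; 771];
  [:: 46; 82; 115; 162; 217; 244; 303; 346; 362; 398; 473; 634; 664; 745; 751; 753; 755; 793];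
  [:: 28; 64; 128; 180; 207; 268; 314; 428; 543; 587; 683; 703; 726; 742; 748; 753; 754; 818];
  [:: 53; 97; 122; 188; 194; 238; 291; 329; 367; 386; 447; 614; 690; 757; 758; 768; 771; 801];
  [:: 33; 87; 135; 157; 217; 249; 274; 402; 560; 606; 661; 707; 718; 756; 758; 761; 776; 778];
  [:: 44; 66; 116; 173; 204; 263; 314; 343; 462; 486; 506; 525; 577; 740; 756; 757; 764; 767];
  [:: 29; 99; 119; 159; 213; 257; 276; 408; 546; 600; 657; 693; 725; 760; 761; 765; 769; 780];
  [:: 56; 70; 118; 169; 208; 247; 306; 353; 467; 494; 508; 528; 575; 745; 759; 761; 763; 772];
  [:: 37; 101; 126; 180; 200; 236; 299; 315; 364; 393; 458; 618; 686; 757; 759; 760; 776; 809];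
  [:: 52; 74; 106; 185; 212; 259; 294; 349; 470; 500; 511; 532; 586; 750; 763; 764; 770; 774];
  [:: 23; 95; 131; 147; 229; 265; 278; 414; 556; 591; 670; 703; 729; 760; 762; 764; 772; 784];
  [:: 49; 77; 130; 168; 198; 244; 307; 325; 375; 390; 454; 625; 677; 758; 762; 763; 767; 815];
  [:: 41; 93; 134; 164; 202; 242; 295; 320; 374; 398; 460; 617; 672; 759; 766; 767; 769; 804];
  [:: 60; 68; 114; 181; 216; 251; 290; 355; 472; 490; 515; 536; 583; 742; 765; 767; 773; 775];
  [:: 21; 103; 123; 155; 225; 253; 280; 406; 549; 589; 668; 696; 720; 758; 764; 765; 766; 788];
  [:: 31; 91; 143; 151; 209; 245; 282; 401; 565; 605; 654; 712; 716; 756; 769; 770; 771; 789];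
  [:: 48; 64; 110; 165; 220; 271; 310; 347; 474; 483; 516; 538; 572; 736; 759; 765; 768; 770];
  [:: 61; 85; 138; 184; 196; 234; 287; 333; 362; 388; 452; 609; 689; 762; 768; 769; 774; 800];
  [:: 36; 76; 108; 177; 224; 255; 302; 336; 478; 502; 520; 542; 579; 753; 756; 768; 772; 773];
  [:: 45; 81; 142; 176; 190; 240; 311; 322; 371; 380; 443; 628; 682; 760; 763; 771; 773; 817];
  [:: 27; 79; 127; 149; 221; 269; 284; 419; 552; 599; 665; 699; 733; 766; 771; 772; 775; 794];
  [:: 25; 83; 139; 153; 205; 261; 286; 412; 563; 595; 651; 710; 726; 762; 770; 775; 776; 795];
  [:: 57; 89; 146; 172; 192; 232; 303; 332; 357; 382; 444; 623; 679; 766; 773; 774; 776; 811];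
  [:: 40; 72; 112; 161; 228; 267; 298; 339; 481; 496; 522; 544; 567; 749; 757; 761; 774; 775];
  [:: 54; 80; 139; 159; 193; 251; 279; 325; 344; 371; 426; 593; 732; 738; 778; 779; 789; 792];
  [:: 33; 93; 129; 184; 215; 231; 293; 465; 518; 627; 665; 676; 703; 757; 777; 779; 782; 797];
  [:: 43; 74; 108; 174; 206; 270; 303; 385; 399; 483; 528; 548; 640; 777; 778; 785; 788; 803];
  [:: 29; 77; 141; 188; 211; 233; 301; 471; 504; 621; 651; 683; 699; 759; 781; 782; 786; 790];
  [:: 55; 76; 112; 170; 210; 262; 287; 395; 404; 486; 536; 550; 638; 780; 782; 784; 793; 808];
  [:: 38; 84; 143; 155; 199; 259; 277; 322; 351; 357; 437; 597; 728; 746; 778; 780; 781; 797];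
  [:: 51; 64; 116; 186; 214; 250; 299; 391; 407; 490; 542; 553; 649; 784; 785; 791; 795; 813];
  [:: 23; 89; 137; 164; 227; 235; 309; 477; 514; 612; 661; 687; 712; 763; 781; 783; 785; 793];
  [:: 50; 88; 119; 149; 197; 267; 285; 333; 348; 367; 433; 604; 719; 752; 779; 783; 784; 788];
  [:: 42; 92; 135; 147; 201; 255; 283; 332; 356; 362; 439; 596; 714; 741; 780; 787; 788; 790];
  [:: 59; 72; 110; 182; 218; 246; 291; 397; 409; 494; 532; 557; 646; 786; 788; 794; 796; 805];
  [:: 21; 81; 145; 180; 223; 237; 297; 469; 507; 610; 654; 678; 710; 767; 779; 785; 786; 787];
  [:: 31; 101; 133; 172; 207; 239; 289; 464; 523; 626; 670; 674; 696; 768; 777; 790; 791; 792];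
  [:: 47; 68; 106; 166; 222; 266; 311; 389; 411; 496; 525; 558; 635; 780; 786; 789; 791; 799];
  [:: 62; 96; 127; 157; 195; 247; 275; 320; 346; 375; 431; 588; 731; 737; 783; 789; 790; 795];
  [:: 35; 66; 118; 178; 226; 258; 295; 378; 415; 500; 544; 562; 642; 777; 789; 793; 794; 816];
  [:: 46; 100; 123; 153; 189; 271; 281; 329; 338; 364; 422; 607; 724; 754; 781; 784; 792; 794];
  [:: 27; 85; 121; 168; 219; 241; 313; 482; 510; 620; 657; 691; 707; 773; 787; 792; 793; 796];
  [:: 25; 97; 125; 176; 203; 243; 305; 475; 521; 616; 668; 684; 693; 774; 783; 791; 796; 797];
  [:: 58; 104; 131; 151; 191; 263; 273; 315; 340; 374; 423; 602; 721; 748; 787; 794; 795; 797];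
  [:: 39; 70; 114; 162; 230; 254; 307; 381; 418; 502; 538; 564; 630; 778; 782; 795; 796; 812];
  [:: 32; 102; 112; 149; 213; 246; 304; 461; 484; 632; 668; 676; 729; 735; 799; 800; 801; 816];
  [:: 47; 87; 121; 179; 192; 244; 309; 365; 435; 520; 528; 564; 629; 790; 798; 800; 804; 807];
  [:: 61; 71; 128; 173; 223; 251; 273; 322; 338; 393; 416; 573; 698; 770; 798; 799; 810; 813];
  [:: 53; 63; 140; 169; 227; 259; 275; 332; 340; 398; 417; 584; 702; 756; 798; 802; 803; 816];
  [:: 34; 94; 110; 153; 225; 250; 288; 453; 488; 633; 670; 683; 733; 739; 801; 803; 809; 812];
  [:: 43; 99; 125; 163; 196; 240; 313; 373; 438; 522; 536; 558; 622; 779; 801; 802; 806; 815];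
  [:: 41; 69; 136; 185; 203; 267; 277; 329; 344; 380; 400; 581; 708; 765; 799; 805; 806; 807];
  [:: 59; 95; 129; 175; 200; 234; 289; 370; 421; 506; 542; 550; 613; 787; 804; 806; 811; 818];
  [:: 22; 82; 118; 157; 221; 254; 300; 445; 489; 637; 651; 687; 716; 743; 803; 804; 805; 815];
  [:: 30; 78; 116; 151; 229; 258; 292; 441; 492; 639; 665; 678; 726; 744; 799; 804; 808; 809];
  [:: 55; 103; 133; 167; 194; 232; 305; 377; 434; 516; 532; 548; 611; 781; 807; 809; 814; 817];
  [:: 37; 65; 144; 181; 219; 255; 279; 333; 346; 390; 413; 585; 701; 761; 802; 807; 808; 812];
  [:: 26; 98; 108; 147; 217; 262; 312; 457; 497; 643; 657; 674; 720; 747; 800; 811; 812; 813];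
  [:: 57; 75; 132; 165; 211; 247; 281; 325; 348; 386; 405; 578; 694; 775; 805; 810; 812; 818];
  [:: 39; 91; 137; 187; 190; 242; 297; 366; 427; 511; 525; 562; 624; 797; 802; 809; 810; 811];
  [:: 51; 79; 141; 171; 202; 238; 293; 358; 425; 508; 544; 557; 619; 783; 800; 810; 814; 815];
  [:: 24; 90; 114; 159; 205; 266; 296; 450; 499; 645; 654; 691; 718; 751; 808; 813; 815; 817];
  [:: 49; 67; 120; 177; 207; 271; 283; 315; 351; 382; 403; 568; 713; 764; 803; 806; 813; 814];
  [:: 35; 83; 145; 183; 198; 236; 301; 360; 430; 515; 538; 553; 615; 792; 798; 801; 817; 818];
  [:: 45; 73; 124; 161; 215; 263; 285; 320; 356; 388; 410; 571; 706; 772; 808; 814; 816; 818];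
  [:: 28; 86; 106; 155; 209; 270; 308; 449; 501; 650; 661; 684; 725; 755; 805; 811; 816; 817]].

Definition hexagon_generators : seq (seq N) := [::
  [::
    137; 571; 400; 670; 172; 789; 65; 540; 374; 802; 812; 809; 525; 790; 266; 288; 537; 604; 346; 791;
    195; 71; 501; 669; 671; 658; 664; 354; 272; 718; 41; 199; 610; 763; 131; 739; 34; 506; 358; 683;
    225; 485; 714; 633; 110; 287; 14; 733; 94; 472; 323; 153; 453; 161; 121; 803; 801; 36; 231; 488;
    250; 693; 379; 72; 54; 656; 476; 177; 304; 600; 321; 138; 18; 742; 442; 784; 612; 297; 562; 758;
    204; 187; 511; 483; 27; 811; 810; 615; 82; 427; 91; 353; 286; 242; 624; 534; 533; 366; 190; 723;
    152; 797; 39; 526; 527; 0; 66; 651; 484; 608; 692; 293; 209; 552; 469; 328; 705; 23; 107; 413;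
    279; 349; 341; 255; 390; 183; 713; 144; 701; 303; 754; 219; 585; 322; 59; 807; 808; 122; 509; 37;
    761; 347; 345; 333; 181; 253; 644; 570; 572; 233; 566; 634; 21; 569; 586; 215; 817; 313; 393; 493;
    97; 213; 44; 268; 689; 7; 171; 135; 636; 775; 623; 312; 597; 316; 451; 49; 513; 420; 744; 528;
    531; 404; 646; 189; 417; 254; 88; 541; 542; 792; 777; 523; 289; 674; 239; 768; 31; 626; 133; 696;
    101; 207; 464; 68; 411; 731; 127; 780; 786; 737; 62; 635; 311; 431; 247; 166; 389; 588; 157; 47;
    799; 96; 320; 558; 106; 275; 375; 496; 222; 783; 795; 415; 412; 56; 439; 677; 160; 401; 399; 277;
    804; 702; 79; 249; 721; 67; 371; 331; 740; 188; 573; 583; 681; 57; 519; 657; 627; 123; 648; 112;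
    237; 543; 532; 90; 302; 264; 686; 5; 196; 538; 539; 556; 449; 170; 738; 228; 682; 386; 52; 360;
    363; 765; 134; 372; 373; 796; 273; 709; 478; 437; 118; 100; 184; 86; 517; 659; 444; 551; 217; 587;
    326; 603; 605; 814; 499; 30; 625; 200; 140; 592; 595; 265; 16; 785; 149; 61; 601; 640; 261; 356;
    641; 563; 69; 477; 500; 163; 685; 800; 698; 128; 762; 770; 774; 294; 369; 639; 81; 564; 642; 214;
    522; 663; 394; 308; 710; 788; 654; 180; 661; 660; 662; 530; 428; 232; 818; 28; 755; 741; 463; 236;
    448; 355; 235; 461; 460; 459; 325; 340; 55; 338; 337; 336; 764; 307; 454; 244; 243; 2; 745; 335;
    193; 497; 63; 665; 445; 452; 455; 145; 652; 480; 666; 667; 668; 285; 482; 621; 270; 711; 481; 447;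
    756; 291; 561; 124; 618; 617; 620; 611; 74; 141; 58; 495; 329; 109; 813; 238; 619; 544; 150; 715;
    599; 234; 402; 596; 426; 116; 613; 717; 115; 805; 95; 421; 507; 192; 429; 113; 114; 6; 590; 53;
    638; 632; 630; 631; 691; 794; 241; 734; 719; 716; 202; 591; 707; 568; 487; 85; 29; 334; 376; 165;
    125; 292; 262; 536; 781; 489; 486; 498; 136; 555; 609; 198; 479; 491; 490; 766; 290; 175; 216; 50;
    732; 210; 315; 396; 398; 397; 577; 578; 576; 508; 760; 70; 650; 368; 310; 494; 218; 787; 139; 309;
    182; 306; 305; 17; 251; 504; 475; 550; 318; 252; 197; 441; 560; 704; 73; 324; 220; 643; 327; 753;
    158; 557; 20; 259; 260; 22; 806; 743; 92; 687; 518; 176; 772; 628; 607; 505; 98; 771; 520; 76;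
    258; 317; 574; 773; 221; 419; 793; 364; 281; 432; 435; 422; 284; 283; 8; 434; 282; 381; 433; 403;
    60; 391; 388; 383; 271; 815; 382; 13; 211; 212; 370; 367; 361; 224; 645; 330; 223; 378; 418; 256;
    43; 278; 130; 151; 298; 688; 672; 684; 186; 185; 4; 546; 548; 547; 385; 779; 174; 257; 89; 173;
    725; 759; 276; 582; 108; 352; 425; 424; 423; 103; 767; 589; 395; 430; 280; 553; 816; 301; 392; 24;
    350; 104; 380; 559; 12; 83; 84; 565; 126; 720; 440; 735; 168; 201; 535; 405; 492; 406; 162; 146;
    159; 314; 102; 798; 729; 470; 32; 407; 579; 581; 580; 148; 410; 679; 35; 203; 147; 245; 438; 680;
    274; 678; 319; 248; 365; 409; 105; 408; 514; 1; 155; 156; 752; 178; 357; 154; 416; 690; 299; 629;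
    673; 712; 706; 700; 750; 99; 502; 676; 751; 132; 42; 167; 208; 300; 529; 602; 778; 93; 703; 446;
    227; 594; 757; 606; 87; 33; 117; 75; 377; 362; 359; 387; 269; 616; 78; 593; 512; 119; 647; 545;
    120; 614; 554; 3; 25; 26; 77; 584; 503; 9; 10; 11; 15; 46; 45; 637; 263; 457; 64; 516;
    769; 730; 697; 48; 598; 169; 653; 458; 708; 226; 456; 129; 736; 384; 296; 699; 339; 229; 474; 724;
    332; 230; 443; 51; 473; 466; 467; 465; 351; 179; 694; 342; 344; 343; 206; 205; 19; 38; 414; 450;
    727; 622; 111; 575; 675; 191; 726; 142; 549; 782; 728; 143; 746; 295; 348; 515; 524; 521; 40; 722;
    695; 776; 567; 267; 194; 436; 510; 649; 240; 655; 246; 164; 80; 462; 468; 471; 749; 748; 747];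
  [::
    517; 511; 523; 648; 257; 340; 36; 753; 771; 87; 713; 405; 233; 191; 108; 479; 477; 478; 423; 796;
    263; 585; 31; 513; 286; 640; 645; 649; 650; 746; 221; 147; 487; 537; 123; 757; 606; 467; 469; 799;
    435; 491; 198; 500; 742; 141; 664; 88; 12; 732; 175; 45; 110; 313; 672; 359; 616; 39; 452; 256;
    170; 232; 737; 529; 53; 516; 518; 641; 280; 146; 338; 182; 443; 203; 618; 604; 86; 712; 711; 343;
    446; 426; 306; 490; 378; 183; 346; 780; 683; 815; 120; 729; 368; 27; 671; 571; 566; 230; 460; 40;
    292; 704; 710; 2; 234; 164; 205; 507; 489; 639; 621; 705; 723; 375; 393; 35; 9; 288; 231; 133;
    584; 424; 425; 201; 535; 420; 438; 408; 399; 547; 185; 689; 150; 701; 310; 407; 406; 112; 593; 281;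
    811; 68; 719; 265; 728; 656; 208; 135; 583; 365; 296; 762; 74; 667; 210; 512; 510; 187; 812; 553;
    22; 89; 173; 277; 594; 421; 692; 197; 318; 546; 759; 754; 755; 403; 731; 496; 103; 111; 215; 158;
    557; 392; 610; 451; 125; 258; 16; 735; 738; 63; 801; 138; 505; 341; 339; 355; 337; 752; 311; 55;
    325; 708; 171; 661; 626; 602; 151; 192; 5; 131; 721; 294; 82; 748; 58; 575; 675; 104; 315; 545;
    413; 787; 794; 549; 450; 795; 797; 323; 736; 374; 273; 289; 789; 432; 202; 154; 330; 84; 678; 109;
    419; 56; 484; 524; 522; 784; 227; 577; 758; 429; 37; 94; 179; 369; 128; 303; 29; 283; 627; 598;
    730; 69; 563; 388; 817; 531; 165; 457; 637; 472; 480; 264; 20; 768; 756; 76; 520; 224; 542; 177;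
    336; 773; 772; 502; 302; 579; 255; 582; 352; 300; 335; 588; 422; 567; 155; 779; 548; 213; 349; 41;
    83; 34; 415; 107; 6; 397; 78; 810; 643; 475; 463; 686; 454; 266; 709; 333; 314; 628; 466; 194;
    485; 481; 418; 30; 105; 377; 669; 809; 808; 807; 539; 181; 464; 707; 744; 252; 521; 44; 497; 360;
    362; 361; 427; 433; 440; 200; 370; 805; 785; 367; 285; 157; 806; 445; 267; 380; 804; 13; 212; 211;
    271; 722; 592; 572; 127; 506; 816; 615; 236; 219; 113; 261; 538; 220; 769; 145; 745; 455; 465; 620;
    275; 322; 617; 298; 316; 308; 474; 473; 297; 690; 14; 17; 8; 326; 687; 276; 307; 611; 681; 272;
    354; 670; 270; 501; 818; 699; 684; 54; 747; 66; 580; 321; 600; 137; 65; 293; 209; 0; 71; 72;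
    428; 97; 350; 196; 803; 373; 10; 102; 101; 98; 532; 622; 589; 412; 240; 301; 734; 442; 514; 156;
    319; 750; 550; 152; 249; 688; 434; 561; 659; 282; 552; 543; 47; 666; 657; 655; 382; 383; 381; 515;
    206; 658; 59; 569; 605; 574; 342; 106; 560; 558; 559; 530; 394; 214; 363; 733; 237; 389; 166; 790;
    398; 305; 578; 634; 269; 351; 715; 714; 716; 608; 57; 635; 633; 376; 290; 116; 241; 199; 259; 437;
    782; 99; 416; 706; 802; 250; 488; 607; 793; 153; 100; 32; 142; 439; 436; 430; 114; 345; 576; 329;
    327; 328; 453; 387; 119; 632; 317; 204; 190; 595; 696; 274; 519; 631; 630; 697; 122; 356; 698; 163;
    64; 121; 38; 130; 129; 18; 603; 132; 486; 718; 724; 727; 26; 3; 25; 90; 528; 624; 814; 24;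
    751; 682; 676; 685; 251; 23; 291; 458; 476; 43; 720; 587; 178; 299; 629; 673; 761; 364; 126; 565;
    482; 67; 254; 470; 700; 596; 599; 590; 228; 244; 143; 172; 404; 646; 139; 140; 11; 623; 551; 144;
    776; 775; 774; 544; 347; 278; 651; 652; 653; 334; 284; 674; 91; 468; 647; 372; 471; 124; 260; 693;
    743; 570; 174; 726; 246; 462; 695; 235; 694; 509; 813; 238; 619; 193; 586; 680; 783; 391; 186; 51;
    332; 344; 777; 279; 371; 92; 28; 134; 786; 42; 741; 740; 148; 564; 556; 449; 195; 448; 358; 81;
    295; 642; 792; 402; 411; 410; 447; 679; 118; 331; 268; 562; 525; 533; 534; 385; 390; 396; 386; 568;
    309; 217; 48; 176; 527; 357; 73; 218; 526; 384; 19; 225; 226; 160; 1; 159; 702; 79; 400; 248;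
    625; 495; 348; 636; 245; 167; 168; 7; 162; 4; 161; 677; 764; 77; 353; 169; 760; 444; 614; 70;
    459; 85; 366; 379; 612; 253; 717; 613; 115; 541; 80; 441; 222; 662; 508; 320; 96; 791; 765; 767;
    766; 262; 781; 536; 180; 654; 788; 247; 287; 21; 431; 660; 216; 242; 663; 638; 229; 188; 60; 749;
    189; 324; 597; 540; 312; 483; 395; 243; 763; 95; 591; 414; 417; 409; 601; 207; 456; 93; 573; 498;
    739; 725; 223; 15; 49; 50; 136; 609; 555; 703; 691; 62; 778; 665; 184; 61; 770; 800; 117; 504;
    401; 75; 668; 499; 492; 493; 494; 52; 239; 304; 461; 149; 798; 46; 554; 503; 33; 581; 644]].

Local Close Scope N_scope.

Definition hexagon_generator_choice : seq nat := [::
  0; 0; 0; 0; 0; 1; 0; 1; 1; 1; 0; 1; 1; 0; 0; 1; 1; 1; 0; 1; 1; 1; 0; 1; 0; 1; 0; 1; 0; 0;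
  1; 1; 1; 1; 0; 1; 0; 0; 1; 0; 0; 1; 0; 0; 0; 1; 1; 0; 0; 1; 1; 0; 0; 0; 0; 0; 1; 0; 0; 0;
  1; 1; 0; 1; 0; 0; 1; 1; 1; 1; 0; 1; 0; 1; 0; 0; 1; 0; 0; 1; 0; 1; 1; 0; 1; 0; 0; 1; 0; 1;
  0; 0; 1; 1; 1; 1; 1; 1; 1; 1; 1; 0; 0; 0; 1; 0; 0; 1; 0; 0; 1; 0; 0; 1; 0; 0; 0; 1; 1; 1;
  0; 0; 1; 1; 0; 1; 0; 1; 1; 1; 1; 1; 1; 1; 1; 0; 1; 0; 1; 0; 0; 1; 1; 1; 0; 1; 1; 1; 1; 1;
  0; 1; 1; 1; 0; 0; 1; 1; 1; 0; 0; 0; 1; 1; 0; 1; 1; 0; 0; 0; 0; 1; 0; 1; 1; 0; 1; 0; 0; 1;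
  0; 1; 0; 0; 0; 0; 0; 0; 0; 1; 1; 1; 1; 0; 1; 1; 1; 1; 0; 1; 1; 1; 0; 0; 0; 0; 1; 0; 1; 1;
  1; 0; 1; 0; 0; 0; 1; 0; 1; 1; 0; 0; 1; 1; 0; 1; 0; 1; 0; 1; 0; 0; 0; 1; 0; 0; 0; 0; 0; 0;
  0; 1; 0; 1; 1; 1; 0; 1; 1; 0; 1; 1; 0; 0; 0; 0; 1; 0; 1; 1; 0; 0; 0; 0; 1; 0; 1; 0; 0; 1;
  1; 0; 0; 0; 1; 0; 1; 0; 0; 0; 0; 1; 1; 1; 1; 0; 0; 1; 1; 0; 1; 0; 0; 0; 0; 0; 0; 0; 1; 1;
  0; 1; 0; 1; 1; 1; 1; 1; 0; 1; 0; 0; 1; 1; 0; 0; 1; 1; 1; 1; 0; 0; 1; 0; 1; 1; 0; 1; 0; 1;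
  1; 0; 1; 1; 1; 0; 0; 0; 0; 1; 0; 1; 0; 0; 1; 0; 0; 1; 0; 1; 1; 0; 1; 1; 1; 0; 1; 0; 1; 1;
  1; 0; 0; 0; 0; 0; 0; 0; 1; 1; 1; 0; 1; 0; 0; 0; 1; 1; 0; 1; 1; 1; 1; 1; 0; 1; 1; 1; 1; 0;
  0; 0; 1; 1; 1; 0; 1; 1; 1; 1; 1; 0; 1; 0; 0; 0; 1; 0; 0; 1; 0; 0; 0; 0; 0; 1; 0; 1; 0; 1;
  0; 1; 0; 0; 0; 1; 0; 0; 1; 0; 1; 0; 1; 1; 1; 0; 1; 1; 1; 1; 0; 1; 0; 0; 0; 0; 0; 1; 1; 1;
  0; 1; 0; 1; 0; 1; 1; 1; 0; 1; 0; 0; 0; 1; 1; 1; 1; 1; 1; 0; 1; 1; 1; 0; 1; 1; 1; 1; 0; 1;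
  0; 1; 1; 0; 1; 1; 0; 1; 0; 1; 0; 1; 0; 1; 0; 0; 1; 1; 0; 1; 0; 0; 1; 0; 0; 1; 1; 1; 0; 1;
  1; 1; 0; 1; 0; 0; 1; 0; 1; 1; 1; 1; 1; 0; 0; 0; 0; 0; 1; 0; 0; 0; 0; 0; 1; 1; 1; 0; 0; 0;
  1; 1; 0; 0; 0; 1; 0; 1; 0; 0; 0; 1; 1; 0; 0; 1; 0; 1; 0; 0; 0; 1; 1; 1; 0; 0; 1; 0; 0; 0;
  1; 0; 0; 0; 1; 0; 1; 0; 0; 1; 1; 0; 1; 1; 1; 1; 1; 0; 1; 1; 0; 1; 0; 1; 0; 1; 1; 1; 1; 0;
  1; 0; 0; 0; 0; 1; 0; 0; 1; 0; 1; 0; 1; 0; 0; 1; 1; 1; 1; 0; 1; 1; 0; 0; 0; 1; 0; 0; 1; 0;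
  1; 1; 1; 1; 1; 0; 0; 1; 0; 0; 1; 0; 1; 0; 1; 0; 1; 1; 1; 0; 1; 0; 1; 1; 1; 1; 0; 0; 1; 1;
  1; 0; 1; 0; 0; 0; 0; 1; 0; 0; 1; 1; 0; 1; 0; 1; 1; 1; 1; 0; 0; 1; 1; 0; 0; 1; 1; 0; 1; 1;
  0; 1; 0; 1; 0; 1; 0; 1; 1; 1; 1; 0; 0; 1; 1; 1; 0; 1; 1; 1; 0; 1; 0; 0; 1; 0; 1; 1; 1; 0;
  1; 0; 1; 1; 1; 0; 1; 1; 0; 1; 0; 0; 1; 0; 0; 1; 1; 0; 1; 1; 0; 1; 0; 0; 0; 1; 0; 0; 0; 0;
  0; 0; 1; 0; 0; 1; 0; 1; 0; 1; 1; 1; 1; 0; 0; 0; 1; 0; 0; 1; 0; 0; 1; 0; 1; 1; 1; 1; 0; 0;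
  0; 1; 0; 1; 1; 1; 0; 1; 0; 0; 1; 0; 1; 1; 1; 0; 1; 1; 0; 1; 1; 0; 0; 0; 1; 1; 0; 1; 1; 0;
  1; 1; 1; 0; 1; 0; 0; 1; 0].

Lemma hexagon_table_ok : table_ok 819 hexagon_table.
Proof. by vm_compute. Qed.

Definition hexagon : ltgraph := table_graph hexagon_table_ok.

Lemma card_hexagon : #|hexagon| = 819.
Proof. exact: card_table_graph. Qed.

Lemma card_triangles_hexagon : 819 * 18 <= #|triangles hexagon|.
Proof.
apply: leq_trans (card_arcs_le_triangles (@table_graph_common_nbr _ _ (isT : 0 < 819) _)).
by rewrite card_table_arcs // unlock; vm_compute.
Qed.

Lemma card_closed_walks5_hexagon : #|closed_walks5 hexagon| <= 819 * 1530.
Proof.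
apply: leq_trans (@card_table_closed_walks5 _ _ (isT : 0 < 819) _
  hexagon_generators hexagon_generator_choice 12 _) _.
  by vm_compute.
by rewrite leq_mul2l card_table_closed_walks5_at unlock; vm_compute.
Qed.

Lemma leq_INR m n : m <= n -> (INR m <= INR n)%R.
Proof. by move/leP/le_INR. Qed.

Lemma INR_muln m n : INR (m * n) = (INR m * INR n)%R.
Proof. exact: mult_INR. Qed.

Lemma INR_expn m n : INR (m ^ n) = (INR m ^ n)%R.
Proof. by elim: n => [|n IHn]; rewrite ?expn0 // expnS INR_muln IHn. Qed.

Lemma INR_muln_expn a b c d : INR (a ^ b * c ^ d) = (INR a ^ b * INR c ^ d)%R.
Proof. by rewrite INR_muln !INR_expn. Qed.

Local Open Scope R_scope.

Lemma Rpower_gt_of_pow_lt (w a s : R) (p q : nat) :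
  0 <= w -> 1 <= a -> (0 < q)%N -> INR p / INR q <= s -> w ^ q < a ^ p -> w < Rpower a s.
Proof.
move=> w_ge0 a_ge1 q_gt0 pq_le_s lt_wa; apply: Rnot_le_lt => le_aw.
have a_gt0 : 0 < a by lra.
have q_neq0 : INR q <> 0 by apply: not_0_INR; apply/eqP; rewrite -lt0n.
have a_p : Rpower a (INR p / INR q) ^ q = a ^ p.
  rewrite -Rpower_pow; last exact: exp_pos.
  by rewrite Rpower_mult -Rpower_pow //; congr Rpower; field.
suff : a ^ p <= w ^ q by lra.
rewrite -a_p; apply: pow_incr; split; first exact/Rlt_le/exp_pos.
exact: Rle_trans (Rle_Rpower _ _ _ a_ge1 pq_le_s) le_aw.
Qed.

Lemma geometric_little_o (a w s : R) (x : nat -> R) :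
  0 < a -> 0 <= w -> w < Rpower a s -> (forall m, x m <= w ^ m.+1) ->
  forall eps, 0 < eps -> exists M, forall m, (M <= m)%N -> x m <= eps * Rpower (a ^ m.+1) s.
Proof.
move=> a_gt0 w_ge0 lt_w x_le eps eps_gt0.
set b := Rpower a s in lt_w *; have b_gt0 : 0 < b by apply: exp_pos.
set r := w / b; have rb : r * b = w by rewrite /r; field; lra.
have r_ge0 : 0 <= r by nra.
have r_lt1 : r < 1 by nra.
have [M r_small] := pow_lt_1_zero r (ltac:(rewrite Rabs_pos_eq; lra)) eps eps_gt0.
exists M => m le_Mm.
have b_pow : Rpower (a ^ m.+1) s = b ^ m.+1.
  rewrite -Rpower_pow // Rpower_mult (Rmult_comm (INR _)) -Rpower_mult.
  exact: Rpower_pow.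
have r_pow : r ^ m.+1 < eps.
  have := r_small m.+1 (leP (leq_trans le_Mm (leqnSn m))).
  by rewrite Rabs_pos_eq //; apply: pow_le.
rewrite b_pow; apply: Rle_trans (x_le m) _; rewrite -rb Rpow_mult_distr.
by apply: Rmult_le_compat_r; [apply: pow_le; lra | lra].
Qed.

Lemma pow_mul_sqrt_le (a t : R) (k : nat) :
  0 <= a -> 0 <= t -> a ^ 3 <= t ^ 2 -> a ^ k * sqrt (a ^ k) <= t ^ k.
Proof.
move=> a_ge0 t_ge0 a3_le_t2.
have ak_ge0 : 0 <= a ^ k by apply: pow_le.
apply: Rsqr_incr_0_var; last exact: pow_le.
rewrite Rsqr_mult Rsqr_sqrt // /Rsqr -!Rpow_mult_distr.
apply: pow_incr; split; first by apply: Rmult_le_pos; [apply: Rmult_le_pos | ].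
by move: a3_le_t2; rewrite /=; nra.
Qed.

Section TensorPowers.
Variable B : ltgraph.

Lemma INR_card_tensor_pow m : INR #|tensor_pow B m| = INR #|B| ^ m.+1.
Proof. by rewrite card_tensor_pow INR_expn. Qed.

Lemma card_tensor_pow_unbounded : (1 < #|B|)%N ->
  forall N, exists M, forall m, (M <= m)%N -> (N <= #|tensor_pow B m|)%N.
Proof.
move=> B_gt1 N; exists N => m le_Nm; rewrite card_tensor_pow.
exact: leq_trans le_Nm (ltnW (leq_ltn_trans (leqnSn m) (ltn_expl m.+1 B_gt1))).
Qed.

Lemma num_C5_tensor_pow_little_o (p q : nat) (s : R) :
  (0 < #|B|)%N -> (0 < q)%N -> INR p / INR q <= s ->
  INR #|closed_walks5 B| ^ q < INR #|B| ^ p ->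
  forall eps, 0 < eps -> exists M, forall m, (M <= m)%N ->
    INR (num_C5 (edge_set (tensor_pow B m))) <= eps * Rpower (INR #|tensor_pow B m|) s.
Proof.
move=> B_gt0 q_gt0 pq_le_s lt_wa eps eps_gt0.
have a_ge1 : 1 <= INR #|B| by apply: (leq_INR B_gt0).
have x_le m : INR (num_C5 (edge_set (tensor_pow B m))) <= INR #|closed_walks5 B| ^ m.+1.
  rewrite -INR_expn; apply: leq_INR.
  exact: leq_trans (num_C5_le_closed_walks5 _) (card_closed_walks5_tensor_pow _ _).
have [M small] := geometric_little_o (Rlt_le_trans _ _ _ Rlt_0_1 a_ge1) (pos_INR _)
  (Rpower_gt_of_pow_lt (pos_INR _) a_ge1 q_gt0 pq_le_s lt_wa) x_le eps_gt0.
by exists M => m le_Mm; rewrite INR_card_tensor_pow; apply: small.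
Qed.

Lemma tensor_pow_far_from_triangle_free :
  INR #|B| ^ 3 <= INR #|triangles B| ^ 2 ->
  forall m (F : {set {set 'I_#|tensor_pow B m|}}), F \subset edge_set (tensor_pow B m) ->
    INR #|edge_set (tensor_pow B m) :\: F| <
      1 / 6 * (INR #|tensor_pow B m| * sqrt (INR #|tensor_pow B m|)) ->
    ~ triangle_free F.
Proof.
move=> dense m F FE few F_free.
have tri_le : INR #|triangles B| ^ m.+1 <= 6 * INR #|edge_set (tensor_pow B m) :\: F|.
  have -> : 6 = INR 6 by rewrite INR_IZR_INZ.
  rewrite -INR_expn -INR_muln; apply: leq_INR.
  exact: leq_trans (card_triangles_tensor_pow _ _) (card_triangles_le_deleted FE F_free).
have := pow_mul_sqrt_le m.+1 (pos_INR #|B|) (pos_INR _) dense.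
rewrite INR_card_tensor_pow in few; lra.
Qed.

End TensorPowers.

Local Close Scope R_scope.

Definition base_graph : ltgraph := tensor (tensor_pow hexagon 3) (tensor_pow k3 12).

Lemma card_base_graph : #|base_graph| = 819 ^ 4 * 3 ^ 13.
Proof. by rewrite card_tensor !card_tensor_pow card_hexagon card_k3. Qed.

Lemma card_triangles_base_graph : (819 * 18) ^ 4 * 6 ^ 13 <= #|triangles base_graph|.
Proof.
apply: leq_trans (card_triangles_tensor _ _).
apply: leq_mul; apply: leq_trans (card_triangles_tensor_pow _ _); rewrite leq_exp2r //.
  exact: card_triangles_hexagon.
exact: card_triangles_k3.
Qed.

Lemma card_closed_walks5_base_graph :
  #|closed_walks5 base_graph| <= (819 * 1530) ^ 4 * (3 * 10) ^ 13.
Proof.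
apply: leq_trans (card_closed_walks5_tensor _ _) _.
apply: leq_mul; apply: leq_trans (card_closed_walks5_tensor_pow _ _) _; rewrite leq_exp2r //.
  exact: card_closed_walks5_hexagon.
exact: card_closed_walks5_k3.
Qed.

Local Open Scope R_scope.

Lemma INR_card_base_graph : INR #|base_graph| = 819 ^ 4 * 3 ^ 13.
Proof. by rewrite card_base_graph INR_muln_expn !INR_IZR_INZ. Qed.

Lemma INR_card_triangles_base_graph : (819 * 18) ^ 4 * 6 ^ 13 <= INR #|triangles base_graph|.
Proof.
apply: (Rle_trans _ _ _ _ (leq_INR card_triangles_base_graph)).
by rewrite INR_muln_expn (INR_muln 819) !INR_IZR_INZ; apply: Rle_refl.
Qed.

Lemma INR_card_closed_walks5_base_graph :
  INR #|closed_walks5 base_graph| <= (819 * 1530) ^ 4 * (3 * 10) ^ 13.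
Proof.
apply: (Rle_trans _ _ _ (leq_INR card_closed_walks5_base_graph)).
rewrite INR_muln_expn (INR_muln 819) (INR_muln 3) !INR_IZR_INZ; apply: Rle_refl.
Qed.

Lemma base_graph_dense : INR #|base_graph| ^ 3 <= INR #|triangles base_graph| ^ 2.
Proof.
have tri_ge0 : 0 <= (819 * 18) ^ 4 * 6 ^ 13 by apply: Rmult_le_pos; apply: pow_le; lra.
apply: (Rle_trans _ _ _ _ (pow_incr _ _ 2 (conj tri_ge0 INR_card_triangles_base_graph))).
rewrite INR_card_base_graph -!mult_IZR !pow_IZR -!mult_IZR !pow_IZR; apply: IZR_le.
by vm_compute.
Qed.

Lemma base_graph_sparse : INR #|closed_walks5 base_graph| ^ 43 < INR #|base_graph| ^ 105.
Proof.
have walks_le := pow_incr _ _ 43 (conj (pos_INR _) INR_card_closed_walks5_base_graph).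
apply: (Rle_lt_trans _ _ _ walks_le).
rewrite INR_card_base_graph -!mult_IZR !pow_IZR -!mult_IZR !pow_IZR; apply: IZR_lt.
by vm_compute.
Qed.

Local Close Scope R_scope.

Theorem proposition1p6 :
  exists (c : R) (n : nat -> nat) (G : forall m : nat, {set {set 'I_(n m)}}),
    [/\ (0 < c)%R,
        (forall m, simple_graph (G m)),
        (* n_m -> infinity *)
        (forall N : nat, exists M : nat, forall m : nat, (M <= m)%N -> (N <= n m)%N),
        (* number of C5 copies is o(n_m^2.442) *)
        (forall eps : R, (0 < eps)%R -> exists M : nat, forall m : nat, (M <= m)%N ->
            (INR (num_C5 (G m)) <= eps * Rpower (INR (n m)) (2442 / 1000))%R)
      & (* deleting fewer than c n_m^(3/2) edges never yields a triangle-free graph *)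
        (forall (m : nat) (F : {set {set 'I_(n m)}}),
            F \subset G m ->
            (INR #|G m :\: F| < c * (INR (n m) * sqrt (INR (n m))))%R ->
            ~ triangle_free F)].
Proof.
have B_gt1 : 1 < #|base_graph|.
  rewrite card_base_graph; apply: (leq_trans _ (leq_pmull _ _)); last by rewrite expn_gt0.
  by rewrite -{1}(expn0 3) ltn_exp2l.
exists (1 / 6)%R, (fun m => #|tensor_pow base_graph m|),
  (fun m => edge_set (tensor_pow base_graph m)).
split.
- lra.
- by move=> m; apply: edge_set_simple.
- exact: card_tensor_pow_unbounded.
- apply: (num_C5_tensor_pow_little_o (p := 105)) base_graph_sparse => //.
    exact: ltnW.
  by rewrite !INR_IZR_INZ /=; lra.
- exact: tensor_pow_far_from_triangle_free base_graph_dense.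
Qed.
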